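(* Let $\mathcal K$ be a 2-category and $\{\lambda_{i,j}:s_js_i\to s_is_j\}_{0\le i<j\le 2}$ a 0-cell of $\mathsf{Wdl}^{(2)}(\overline{\mathcal K})$. Define the 2-cells $\overrightarrow\lambda_{0,p,q}:=\mu_0s_ps_q.s_0\lambda_{0,p}s_q.s_0s_p\lambda_{0,q}.s_0s_ps_q\eta_0:s_0s_ps_q\to s_0s_ps_q$ for $(p,q)\in\{(1,2),(2,1)\}$, and $\overleftarrow\lambda_{k,l,2}:=s_ks_l\mu_2.s_k\lambda_{l,2}s_2.\lambda_{k,2}s_ls_2.\eta_2s_ks_ls_2:s_ks_ls_2\to s_ks_ls_2$ for $(k,l)\in\{(0,1),(1,0)\}$. These are idempotent 2-cells in $\mathcal K$ and satisfy: (1) $\overrightarrow\lambda_{0,p,q}.\bar\lambda_{0p}s_q=\overrightarrow\lambda_{0,p,q}=\bar\lambda_{0p}s_q.\overrightarrow\lambda_{0,p,q}$; (2) $\overrightarrow\lambda_{0,1,2}.s_0\lambda_{1,2}=s_0\lambda_{1,2}.\overrightarrow\lambda_{0,2,1}$; (3) $\overrightarrow\lambda_{0,p,q}.\lambda_{0,p}s_q=\lambda_{0,p}s_q.s_p\bar\lambda_{0q}$; (4) $\overleftarrow\lambda_{k,l,2}.s_k\bar\lambda_{l2}=\overleftarrow\lambda_{k,l,2}=s_k\bar\lambda_{l2}.\overleftarrow\lambda_{k,l,2}$; (5) $\overleftarrow\lambda_{0,1,2}.\lambda_{0,1}s_2=\lambda_{0,1}s_2.\overleftarrow\lambda_{1,0,2}$;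 (6) $\overleftarrow\lambda_{k,l,2}.s_k\lambda_{l,2}=s_k\lambda_{l,2}.\bar\lambda_{k2}s_l$; (7) $\overleftarrow\lambda_{0,1,2}.\overrightarrow\lambda_{0,1,2}=\overleftarrow\lambda_{0,1,2}.\bar\lambda_{01}s_2=\overrightarrow\lambda_{0,1,2}.s_0\bar\lambda_{12}=\overrightarrow\lambda_{0,1,2}.\overleftarrow\lambda_{0,1,2}$.
   Context: Conventions. For 1-cells, $uw$ is the horizontal composite ($w$ first); for 2-cells $\alpha,\beta$, $\alpha\beta$ is their horizontal composite; a 1-cell next to a 2-cell means whiskering by its identity 2-cell; $\alpha.\beta$ is vertical composition ($\beta$ first). A monad $(A,t)$ has multiplication $\mu:tt\to t$ and unit $\eta:1_A\to t$; indices carry over ($s_i$ has $\mu_i,\eta_i$). Local idempotent closure $\overline{\mathcal K}$: same 0-cells as $\mathcal K$; 1-cells are pairs $(v,\bar v)$ with $v$ a 1-cell of $\mathcal K$ and $\bar v:v\to v$ an idempotent 2-cell; 2-cells $(v,\bar v)\to(v',\bar v')$ are 2-cells $\omega:v\to v'$ of $\mathcal K$ with $\bar v'.\omega=\omega=\omega.\bar v$; compositions induced from $\mathcal K$, identity 2-cell of $(v,\bar v)$ is $\bar v$. A monad $(A,(t,\bar t))$ in $\overline{\mathcal K}$ satisfies in particular $\mu.t\eta=\mu.\eta t=\bar t$; we write just $t$. A weak distributive law in $\overline{\mathcal K}$: monads $(A,t),(A,s)$ in $\overline{\mathcal K}$ and a 2-cell $\lambda:ts\to st$ of $\overline{\mathcal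 K}$ with $\lambda.\mu s=s\mu.\lambda t.t\lambda$, $\lambda.t\mu=\mu t.s\lambda.\lambda s$, $\lambda.\eta s=\mu t.s\lambda.st\eta.s\eta$, $\lambda.t\eta=s\mu.\lambda t.\eta st.\eta t$; its idempotent is $\bar\lambda:=\mu t.s\lambda.st\eta=s\mu.\lambda t.\eta st$. A 0-cell of $\mathsf{Wdl}^{(2)}(\overline{\mathcal K})$ consists of monads $(A,s_0),(A,s_1),(A,s_2)$ in $\overline{\mathcal K}$ and weak distributive laws $\lambda_{i,j}:s_js_i\to s_is_j$ in $\overline{\mathcal K}$ ($0\le i<j\le2$) satisfying the Yang–Baxter relation $\lambda_{0,1}s_2.s_1\lambda_{0,2}.\lambda_{1,2}s_0=s_0\lambda_{1,2}.\lambda_{0,2}s_1.s_2\lambda_{0,1}$. $\bar\lambda_{ij}$ denotes the idempotent of $\lambda_{i,j}$. *)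

(* A strict 2-category presented
   algebraically: sets of 0-, 1- and 2-cells with source/target maps and
   total composition operations whose laws are imposed on composable data. *)

Record TwoCat : Type := {
  ob : Type; c1 : Type; c2 : Type;
  dom1 : c1 -> ob; cod1 : c1 -> ob;
  src2 : c2 -> c1; tgt2 : c2 -> c1;
  id1 : ob -> c1; id2 : c1 -> c2;
  comp1 : c1 -> c1 -> c1;   (* comp1 u w = uw, w first *)
  vcomp : c2 -> c2 -> c2;   (* vcomp a b = a.b, b first *)
  hcomp : c2 -> c2 -> c2;   (* hcomp a b = ab, b first *)
  dom1_id1 : forall a, dom1 (id1 a) = a;
  cod1_id1 : forall a, cod1 (id1 a) = a;
  dom1_comp1 : forall g f, cod1 f = dom1 g -> dom1 (comp1 g f) = dom1 f;
  cod1_comp1 : forall g f, cod1 f = dom1 g -> cod1 (comp1 g f) = cod1 g;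
  comp1A : forall h g f, cod1 f = dom1 g -> cod1 g = dom1 h ->
    comp1 h (comp1 g f) = comp1 (comp1 h g) f;
  comp1_id1r : forall f, comp1 f (id1 (dom1 f)) = f;
  comp1_id1l : forall f, comp1 (id1 (cod1 f)) f = f;
  dom1_src2_tgt2 : forall a, dom1 (src2 a) = dom1 (tgt2 a);
  cod1_src2_tgt2 : forall a, cod1 (src2 a) = cod1 (tgt2 a);
  src2_id2 : forall f, src2 (id2 f) = f;
  tgt2_id2 : forall f, tgt2 (id2 f) = f;
  src2_vcomp : forall a b, src2 a = tgt2 b -> src2 (vcomp a b) = src2 b;
  tgt2_vcomp : forall a b, src2 a = tgt2 b -> tgt2 (vcomp a b) = tgt2 a;
  vcompA : forall a b c, src2 a = tgt2 b -> src2 b = tgt2 c ->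
    vcomp a (vcomp b c) = vcomp (vcomp a b) c;
  vcomp_id2r : forall a, vcomp a (id2 (src2 a)) = a;
  vcomp_id2l : forall a, vcomp (id2 (tgt2 a)) a = a;
  src2_hcomp : forall a b, cod1 (src2 b) = dom1 (src2 a) ->
    src2 (hcomp a b) = comp1 (src2 a) (src2 b);
  tgt2_hcomp : forall a b, cod1 (src2 b) = dom1 (src2 a) ->
    tgt2 (hcomp a b) = comp1 (tgt2 a) (tgt2 b);
  hcompA : forall a b c, cod1 (src2 c) = dom1 (src2 b) ->
    cod1 (src2 b) = dom1 (src2 a) ->
    hcomp a (hcomp b c) = hcomp (hcomp a b) c;
  hcomp_id2r : forall a, hcomp a (id2 (id1 (dom1 (src2 a)))) = a;
  hcomp_id2l : forall a, hcomp (id2 (id1 (cod1 (src2 a)))) a = a;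
  hcomp_id2 : forall g f, cod1 f = dom1 g ->
    hcomp (id2 g) (id2 f) = id2 (comp1 g f);
  interchange : forall a a' b b', src2 a' = tgt2 a -> src2 b' = tgt2 b ->
    cod1 (src2 b) = dom1 (src2 a) ->
    hcomp (vcomp a' a) (vcomp b' b) = vcomp (hcomp a' b') (hcomp a b)
}.

Arguments dom1 {t} _. Arguments cod1 {t} _.
Arguments src2 {t} _. Arguments tgt2 {t} _.
Arguments id1 {t} _. Arguments id2 {t} _.
Arguments comp1 {t} _ _. Arguments vcomp {t} _ _. Arguments hcomp {t} _ _.

Section Defs.
Variable K : TwoCat.

Definition wl (f : c1 K) (a : c2 K) : c2 K := hcomp (id2 f) a.
Definition wr (a : c2 K) (f : c1 K) : c2 K := hcomp a (id2 f).

Definition idem2 (f : c1 K) (x : c2 K) : Prop :=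
  src2 x = f /\ tgt2 x = f /\ vcomp x x = x.

(* A monad (A,(t,tb)) in the local idempotent closure Kbar, unfolded into K.
   In Kbar, whiskering by the 1-cell (t,tb) means horizontal composition with
   its identity 2-cell tb, and the identity 1-cell of A is (1_A, id_{1_A}). *)
Record bar_monad (A : ob K) : Type := {
  bm_t : c1 K; bm_tb : c2 K; bm_mu : c2 K; bm_eta : c2 K;
  bm_dom : dom1 bm_t = A;
  bm_cod : cod1 bm_t = A;
  bm_tb_src : src2 bm_tb = bm_t;
  bm_tb_tgt : tgt2 bm_tb = bm_t;
  bm_tb_idem : vcomp bm_tb bm_tb = bm_tb;
  bm_mu_src : src2 bm_mu = comp1 bm_t bm_t;
  bm_mu_tgt : tgt2 bm_mu = bm_t;
  bm_mu_l : vcomp bm_tb bm_mu = bm_mu;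
  bm_mu_r : vcomp bm_mu (hcomp bm_tb bm_tb) = bm_mu;
  bm_eta_src : src2 bm_eta = id1 A;
  bm_eta_tgt : tgt2 bm_eta = bm_t;
  bm_eta_l : vcomp bm_tb bm_eta = bm_eta;
  bm_eta_r : vcomp bm_eta (id2 (id1 A)) = bm_eta;
  bm_assoc : vcomp bm_mu (hcomp bm_mu bm_tb) = vcomp bm_mu (hcomp bm_tb bm_mu);
  bm_unit_l : vcomp bm_mu (hcomp bm_tb bm_eta) = bm_tb;
  bm_unit_r : vcomp bm_mu (hcomp bm_eta bm_tb) = bm_tb
}.

Arguments bm_t {A} _. Arguments bm_tb {A} _.
Arguments bm_mu {A} _. Arguments bm_eta {A} _.

Definition is_wdl {A} (T S : bar_monad A) (lam : c2 K) : Prop :=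
  let t := bm_t T in let tb := bm_tb T in let mut := bm_mu T in let etat := bm_eta T in
  let s := bm_t S in let sb := bm_tb S in let mus := bm_mu S in let etas := bm_eta S in
  src2 lam = comp1 t s /\ tgt2 lam = comp1 s t /\
      vcomp (hcomp sb tb) lam = lam /\ vcomp lam (hcomp tb sb) = lam /\
      vcomp lam (hcomp mut sb)
        = vcomp (hcomp sb mut) (vcomp (hcomp lam tb) (hcomp tb lam)) /\
      vcomp lam (hcomp tb mus)
        = vcomp (hcomp mus tb) (vcomp (hcomp sb lam) (hcomp lam sb)) /\
      vcomp lam (hcomp etat sb)
        = vcomp (hcomp mus tb) (vcomp (hcomp sb lam)
            (vcomp (hcomp (hcomp sb tb) etas) (hcomp sb etat))) /\
      vcomp lam (hcomp tb etas)
        = vcomp (hcomp sb mut) (vcomp (hcomp lam tb)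
            (vcomp (hcomp etat (hcomp sb tb)) (hcomp etas tb))).

Definition lam_bar {A} (T S : bar_monad A) (lam : c2 K) : c2 K :=
  vcomp (hcomp (bm_mu S) (bm_tb T))
    (vcomp (hcomp (bm_tb S) lam) (hcomp (hcomp (bm_tb S) (bm_tb T)) (bm_eta S))).

Definition yang_baxter {A} (S0 S1 S2 : bar_monad A) (l01 l02 l12 : c2 K) : Prop :=
  vcomp (hcomp l01 (bm_tb S2)) (vcomp (hcomp (bm_tb S1) l02) (hcomp l12 (bm_tb S0)))
  = vcomp (hcomp (bm_tb S0) l12) (vcomp (hcomp l02 (bm_tb S1)) (hcomp (bm_tb S2) l01)).

Definition wdl2_cell {A} (S0 S1 S2 : bar_monad A) (l01 l02 l12 : c2 K) : Prop :=
  is_wdl S1 S0 l01 /\ is_wdl S2 S0 l02 /\ is_wdl S2 S1 l12 /\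
      yang_baxter S0 S1 S2 l01 l02 l12.

Definition lam_right {A} (S0 Sp Sq : bar_monad A) (l0p l0q : c2 K) : c2 K :=
  let s0 := bm_t S0 in let sp := bm_t Sp in let sq := bm_t Sq in
  vcomp (wr (bm_mu S0) (comp1 sp sq))
   (vcomp (wl s0 (wr l0p sq))
    (vcomp (wl s0 (wl sp l0q))
           (wl (comp1 s0 (comp1 sp sq)) (bm_eta S0)))).

Definition lam_left {A} (Sk Sl S2 : bar_monad A) (lk2 ll2 : c2 K) : c2 K :=
  let sk := bm_t Sk in let sl := bm_t Sl in let s2 := bm_t S2 in
  vcomp (wl (comp1 sk sl) (bm_mu S2))
   (vcomp (wl sk (wr ll2 s2))
    (vcomp (wr lk2 (comp1 sl s2))
           (wr (bm_eta S2) (comp1 sk (comp1 sl s2))))).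

End Defs.

Arguments wl {K} _ _. Arguments wr {K} _ _. Arguments idem2 {K} _ _.
Arguments bm_t {K A} _. Arguments bm_tb {K A} _.
Arguments bm_mu {K A} _. Arguments bm_eta {K A} _.
Arguments is_wdl {K A} _ _ _. Arguments lam_bar {K A} _ _ _.
Arguments yang_baxter {K A} _ _ _ _ _ _. Arguments wdl2_cell {K A} _ _ _ _ _ _.
Arguments lam_right {K A} _ _ _ _ _. Arguments lam_left {K A} _ _ _ _ _.

From Stdlib Require Import List.
Import ListNotations.

(** Both families of 2-cells are instances of one construction.  For a
    2-cell L : s_w s_i => s_i s_w satisfying the multiplicativity axiom of a
    distributive law with respect to mu_i, the composite
    mu_i s_w . s_i L . s_i s_w eta_i is idempotent, absorbs L and commutes
    with mu_i.  Taking for L the law lambda_{0,p} s_q . s_p lambda_{0,q} of s_0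
    over s_p s_q gives the right arrow lambda_{0,p,q}, taking L = lambda_{i,j}
    gives lambda-bar_{ij}; the mirror construction with mu_2, eta_2 on the
    right gives the left arrow lambda_{k,l,2} and the second formula for
    lambda-bar_{ij}, which the unit axioms identify with the first.  Items
    (1), (3), (4), (6) then follow from the distributive-law axioms, while
    (2), (5) and (7) also use the Yang-Baxter relation.

    The computations are carried out on pasting composites: 1-cells
    s_{w_1} ... s_{w_n} are indexed by words w over {0,1,2}, a 2-cell acting
    on a segment of a word is whiskered by identities on both sides, and the
    interchange law becomes the freedom to slide cells on disjoint segments
    past each other.  Everything is first proved in the local idempotent
    closure, whose identity 2-cells are the idempotents sbar_i; composing
    with these idempotents recovers the statements in K. *)

Section Pasting.
Context {K : TwoCat} {A : ob K} {S0 S1 S2 : bar_monad K A}.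

(** * Words and whiskering *)

Definition monad (i : nat) : bar_monad K A :=
  match i with 0 => S0 | 1 => S1 | _ => S2 end.
Definition s (i : nat) : c1 K := bm_t (monad i).
Definition sb (i : nat) : c2 K := bm_tb (monad i).
Definition mu (i : nat) : c2 K := bm_mu (monad i).
Definition eta (i : nat) : c2 K := bm_eta (monad i).

(* Singleton words are not padded by identities, so that [word [0;1;2]] is
   convertible to the 1-cell s_0 (s_1 s_2) of the statement. *)
Fixpoint word (w : list nat) : c1 K :=
  match w with [] => id1 A | i :: w' =>
    match w' with [] => s i | _ => comp1 (s i) (word w') end end.
Fixpoint word_bar (w : list nat) : c2 K :=
  match w with [] => id2 (id1 A) | i :: w' =>
    match w' with [] => sb i | _ => hcomp (sb i) (word_bar w') end end.

Lemma s_dom i : dom1 (s i) = A. Proof. apply bm_dom. Qed.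
Lemma s_cod i : cod1 (s i) = A. Proof. apply bm_cod. Qed.

Lemma word_endo w : dom1 (word w) = A /\ cod1 (word w) = A.
Proof.
  induction w as [|i w IH]; simpl.
  - split; [apply dom1_id1|apply cod1_id1].
  - destruct w as [|j w']; [split; [apply s_dom|apply s_cod]|].
    destruct IH as [IH1 IH2].
    split; [rewrite dom1_comp1|rewrite cod1_comp1]; auto using s_dom, s_cod;
      rewrite IH2, s_dom; reflexivity.
Qed.
Lemma word_dom w : dom1 (word w) = A. Proof. apply word_endo. Qed.
Lemma word_cod w : cod1 (word w) = A. Proof. apply word_endo. Qed.

Lemma word_cons i w : word (i :: w) = comp1 (s i) (word w).
Proof.
  destruct w as [|j w]; [|reflexivity]. simpl.
  assert (H := comp1_id1r _ (s i)); rewrite s_dom in H; symmetry; exact H.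
Qed.

Lemma word_app u v : comp1 (word u) (word v) = word (u ++ v).
Proof.
  induction u as [|i u IH].
  - simpl. assert (H := comp1_id1l _ (word v)); rewrite word_cod in H; exact H.
  - rewrite (word_cons i u), <- app_comm_cons, (word_cons i (u ++ v)).
    rewrite <- comp1A, IH; [reflexivity| |];
      rewrite ?word_cod, ?word_dom, ?s_dom; reflexivity.
Qed.

Lemma sb_src i : src2 (sb i) = s i. Proof. apply bm_tb_src. Qed.
Lemma sb_tgt i : tgt2 (sb i) = s i. Proof. apply bm_tb_tgt. Qed.
Lemma sb_idem i : vcomp (sb i) (sb i) = sb i. Proof. apply bm_tb_idem. Qed.

Lemma word_bar_cons i w : word_bar (i :: w) = hcomp (sb i) (word_bar w).
Proof.
  destruct w as [|j w]; [|reflexivity]. simpl.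
  replace (id1 A) with (id1 (dom1 (src2 (sb i)))) by (rewrite sb_src, s_dom; reflexivity).
  symmetry; apply hcomp_id2r.
Qed.

Lemma word_bar_st w : src2 (word_bar w) = word w /\ tgt2 (word_bar w) = word w.
Proof.
  induction w as [|i w IH].
  - simpl; rewrite src2_id2, tgt2_id2; auto.
  - rewrite word_bar_cons, word_cons. destruct IH as [IH1 IH2].
    rewrite src2_hcomp, tgt2_hcomp; rewrite ?IH1, ?IH2, ?sb_src, ?sb_tgt;
      auto; rewrite word_cod, s_dom; reflexivity.
Qed.
Lemma word_bar_src w : src2 (word_bar w) = word w. Proof. apply word_bar_st. Qed.
Lemma word_bar_tgt w : tgt2 (word_bar w) = word w. Proof. apply word_bar_st. Qed.

Lemma word_bar_idem w : vcomp (word_bar w) (word_bar w) = word_bar w.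
Proof.
  induction w as [|i w IH].
  - simpl. assert (H := vcomp_id2r _ (id2 (id1 A))); rewrite src2_id2 in H; exact H.
  - rewrite word_bar_cons, <- interchange, IH, sb_idem; [reflexivity| | |];
    rewrite ?word_bar_src, ?word_bar_tgt, ?sb_src, ?sb_tgt, ?word_cod, ?s_dom; reflexivity.
Qed.

Lemma word_bar_app u v : hcomp (word_bar u) (word_bar v) = word_bar (u ++ v).
Proof.
  induction u as [|i u IH].
  - simpl. replace (id1 A) with (id1 (cod1 (src2 (word_bar v)))) by (rewrite word_bar_src, word_cod; reflexivity).
    apply hcomp_id2l.
  - rewrite (word_bar_cons i u), <- app_comm_cons, (word_bar_cons i (u ++ v)).
    rewrite <- hcompA, IH; [reflexivity| |];
      rewrite ?word_bar_src, ?sb_src, ?word_cod, ?word_dom, ?s_dom; reflexivity.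
Qed.

(* The identity 2-cells of words, either those of the local idempotent
   closure or those of K: typing and whiskering are developed once for both. *)
Record Identities := mkIdentities { idw : list nat -> c2 K;
  idw_src : forall w, src2 (idw w) = word w;
  idw_tgt : forall w, tgt2 (idw w) = word w;
  idw_idem : forall w, vcomp (idw w) (idw w) = idw w;
  idw_app : forall u v, hcomp (idw u) (idw v) = idw (u ++ v);
  idw_nil : idw [] = id2 (id1 A) }.

Definition Ibar : Identities := mkIdentities word_bar word_bar_src word_bar_tgt word_bar_idem word_bar_app eq_refl.

Lemma id2_word_app u v : hcomp (id2 (word u)) (id2 (word v)) = id2 (word (u ++ v)).
Proof. rewrite hcomp_id2, word_app; auto. rewrite word_cod, word_dom; auto. Qed.
Lemma id2_word_idem w : vcomp (id2 (word w)) (id2 (word w)) = id2 (word w).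
Proof. assert (H := vcomp_id2r _ (id2 (word w))). rewrite src2_id2 in H. exact H. Qed.

Definition IK : Identities := mkIdentities (fun w => id2 (word w)) (fun w => src2_id2 _ (word w))
  (fun w => tgt2_id2 _ (word w)) id2_word_idem id2_word_app eq_refl.

(* For [Ibar] these are exactly the 2-cells s_u => s_v of the local
   idempotent closure. *)
Definition typed (I : Identities) (x : c2 K) (u v : list nat) : Prop :=
  src2 x = word u /\ tgt2 x = word v /\ vcomp (idw I v) x = x /\ vcomp x (idw I u) = x.

Lemma typed_src I x u v : typed I x u v -> src2 x = word u. Proof. intros H; apply H. Qed.
Lemma typed_tgt I x u v : typed I x u v -> tgt2 x = word v. Proof. intros H; apply H. Qed.

Lemma typed_idw I w : typed I (idw I w) w w.
Proof. repeat split; rewrite ?idw_src, ?idw_tgt, ?idw_idem; auto. Qed.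

Lemma typed_vcomp I a b u v w : typed I a v w -> typed I b u v -> typed I (vcomp a b) u w.
Proof.
  intros [Ha1 [Ha2 [Ha3 Ha4]]] [Hb1 [Hb2 [Hb3 Hb4]]].
  assert (Heq : src2 a = tgt2 b) by congruence.
  repeat split.
  - rewrite src2_vcomp; auto.
  - rewrite tgt2_vcomp; auto.
  - rewrite vcompA, Ha3; auto. rewrite idw_src; auto.
  - rewrite <- vcompA, Hb4; auto. rewrite idw_tgt; auto.
Qed.

Lemma typed_hcomp I a b u u' v v' : typed I a u u' -> typed I b v v' -> typed I (hcomp a b) (u ++ v) (u' ++ v').
Proof.
  intros [Ha1 [Ha2 [Ha3 Ha4]]] [Hb1 [Hb2 [Hb3 Hb4]]].
  assert (Heq : cod1 (src2 b) = dom1 (src2 a)) by (rewrite Hb1, Ha1, word_cod, word_dom; auto).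
  repeat split.
  - rewrite src2_hcomp, Ha1, Hb1, word_app; auto.
  - rewrite tgt2_hcomp, Ha2, Hb2, word_app; auto.
  - rewrite <- idw_app, <- interchange, Ha3, Hb3; auto;
    rewrite ?idw_src, ?idw_tgt, ?Ha1, ?Ha2, ?Hb1, ?Hb2, ?word_cod, ?word_dom; auto.
  - rewrite <- idw_app, <- interchange, Ha4, Hb4; auto;
    rewrite ?idw_src, ?idw_tgt, ?Ha1, ?Ha2, ?Hb1, ?Hb2, ?word_cod, ?word_dom; auto.
Qed.

Lemma typed_vcomp' I a b u v v' w U W : typed I a v' w -> typed I b u v -> v = v' -> U = u -> W = w -> typed I (vcomp a b) U W.
Proof. intros; subst; eapply typed_vcomp; eauto. Qed.
Lemma typed_hcomp' I a b u u' v v' U V : typed I a u u' -> typed I b v v' -> U = u ++ v -> V = u' ++ v' -> typed I (hcomp a b) U V.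
Proof. intros; subst; eapply typed_hcomp; eauto. Qed.
Lemma typed_idw' I w U V : U = w -> V = w -> typed I (idw I w) U V.
Proof. intros; subst; apply typed_idw. Qed.

Notation typed_bar := (typed Ibar).
Notation typed_K := (typed IK).

Lemma typed_bar_K x u v : typed_bar x u v -> typed_K x u v.
Proof.
  intros [H1 [H2 _]]. repeat split; auto; simpl.
  - rewrite <- H2. apply vcomp_id2l.
  - rewrite <- H1. apply vcomp_id2r.
Qed.

Lemma idem2_of_typed x w : typed_bar x w w -> vcomp x x = x -> idem2 (word w) x.
Proof. intros (Hsrc & Htgt & _) Hx. repeat split; assumption. Qed.

Lemma typed_sb i : typed_bar (sb i) [i] [i]. Proof. apply (typed_idw Ibar [i]). Qed.
Lemma typed_mu i : typed_bar (mu i) [i; i] [i].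
Proof.
  unfold typed, mu; simpl. repeat split.
  apply bm_mu_src. apply bm_mu_tgt. apply bm_mu_l. apply bm_mu_r.
Qed.
Lemma typed_eta i : typed_bar (eta i) [] [i].
Proof.
  unfold typed, eta; simpl. repeat split.
  apply bm_eta_src. apply bm_eta_tgt. apply bm_eta_l. apply bm_eta_r.
Qed.

Definition whisk (I : Identities) (u : list nat) (x : c2 K) (v : list nat) : c2 K :=
  hcomp (idw I u) (hcomp x (idw I v)).
Notation whisk_bar := (whisk Ibar).
Notation whisk_K := (whisk IK).

Lemma typed_whisk I u x v m n : typed I x m n -> typed I (whisk I u x v) (u ++ m ++ v) (u ++ n ++ v).
Proof. intros Hx. unfold whisk. apply typed_hcomp; [apply typed_idw|]. apply typed_hcomp; auto; apply typed_idw. Qed.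
Lemma typed_whisk' I u x v m n U V : typed I x m n -> U = u ++ m ++ v -> V = u ++ n ++ v -> typed I (whisk I u x v) U V.
Proof. intros; subst; apply typed_whisk; auto. Qed.

Lemma typed_cast I x u v U V : typed I x u v -> U = u -> V = v -> typed I x U V.
Proof. intros; subst; auto. Qed.

Lemma vcomposable I I' a b u v v' w : typed I a v w -> typed I' b u v' -> v' = v -> src2 a = tgt2 b.
Proof. intros Ha Hb Heq; subst; rewrite (typed_src _ _ _ _ Ha), (typed_tgt _ _ _ _ Hb); auto. Qed.
Lemma hcomposable I I' a b u v u' v' : typed I a u v -> typed I' b u' v' -> cod1 (src2 b) = dom1 (src2 a).
Proof. intros Ha Hb; rewrite (typed_src _ _ _ _ Ha), (typed_src _ _ _ _ Hb), word_cod, word_dom; auto. Qed.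

Lemma whisk_nil I x m n : typed I x m n -> whisk I [] x [] = x.
Proof.
  intros Hx. unfold whisk. rewrite idw_nil.
  replace (id1 A) with (id1 (dom1 (src2 x))) by (rewrite (typed_src _ _ _ _ Hx), word_dom; auto).
  rewrite hcomp_id2r.
  replace (id1 (dom1 (src2 x))) with (id1 (cod1 (src2 x))) by (rewrite (typed_src _ _ _ _ Hx), word_dom, word_cod; auto).
  apply hcomp_id2l.
Qed.

Ltac word_eq := first [reflexivity | match goal with |- ?a = ?b =>
  tryif has_evar a then fail else tryif has_evar b then fail else
  (simpl; rewrite ?app_nil_r, <- ?app_assoc; simpl; reflexivity) end].

Ltac typecheck_atom := first [ eapply typed_cast; [eassumption | word_eq | word_eq]
  | eapply typed_cast; [apply typed_mu | word_eq | word_eq]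
  | eapply typed_cast; [apply typed_eta | word_eq | word_eq]
  | eapply typed_cast; [apply typed_sb | word_eq | word_eq]
  | eapply typed_cast; [apply typed_bar_K; eassumption | word_eq | word_eq]
  | eapply typed_cast; [apply typed_bar_K; apply typed_mu | word_eq | word_eq]
  | eapply typed_cast; [apply typed_bar_K; apply typed_eta | word_eq | word_eq]
  | eapply typed_cast; [apply typed_bar_K; apply typed_sb | word_eq | word_eq] ].

Ltac typecheck_step go := first [ lazymatch goal with
  | |- typed _ (vcomp _ _) _ _ => eapply typed_vcomp'; [go | go | word_eq | word_eq | word_eq]
  | |- typed _ (hcomp _ _) _ _ => eapply typed_hcomp'; [go | go | word_eq | word_eq]
  | |- typed _ (whisk _ _ _ _) _ _ => eapply typed_whisk'; [go | word_eq | word_eq]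
  | |- typed _ (idw _ _) _ _ => first [eapply typed_idw'; [word_eq | word_eq]
     | eapply typed_cast; [apply typed_bar_K; apply typed_idw | word_eq | word_eq]]
  | |- _ => typecheck_atom
  end
  | lazymatch goal with |- typed IK _ _ _ => apply typed_bar_K end; go ].

Ltac typecheck := let rec go :=
  first [ (match goal with |- typed ?I _ _ _ => is_evar I; unify I IK end; typecheck_step go) | typecheck_step go ] in go.

Lemma interchange_typed I1 I2 I3 I4 a a' b b' m n p k l q : typed I1 a m n -> typed I2 a' n p -> typed I3 b k l -> typed I4 b' l q ->
  vcomp (hcomp a' b') (hcomp a b) = hcomp (vcomp a' a) (vcomp b' b).
Proof. intros. rewrite interchange; auto; [eapply vcomposable|eapply vcomposable|eapply hcomposable]; eauto. Qed.

Lemma hcompA_typed I1 I2 I3 a b c m n k l p q : typed I1 a m n -> typed I2 b k l -> typed I3 c p q ->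
  hcomp a (hcomp b c) = hcomp (hcomp a b) c.
Proof. intros. rewrite hcompA; auto; eapply hcomposable; eauto. Qed.

Lemma vcompA_typed I1 I2 I3 a b c m n k l : typed I1 a k l -> typed I2 b n k -> typed I3 c m n ->
  vcomp a (vcomp b c) = vcomp (vcomp a b) c.
Proof. intros. rewrite vcompA; auto; eapply vcomposable; eauto. Qed.

Lemma idw_comp I x u v w : typed I x u v -> w = v -> vcomp (idw I w) x = x.
Proof. intros H Heq; subst; apply H. Qed.
Lemma comp_idw I x u v w : typed I x u v -> w = u -> vcomp x (idw I w) = x.
Proof. intros H Heq; subst; apply H. Qed.

Lemma whisk_vcomp I u v x y m n k : typed I x m n -> typed I y k m ->
  vcomp (whisk I u x v) (whisk I u y v) = whisk I u (vcomp x y) v.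
Proof.
  intros. unfold whisk.
  erewrite (interchange_typed I I I I (idw I u) (idw I u) (hcomp y (idw I v)) (hcomp x (idw I v))) by typecheck.
  rewrite idw_idem.
  erewrite (interchange_typed I I I I y x (idw I v) (idw I v)) by typecheck.
  rewrite idw_idem. reflexivity.
Qed.

Ltac hcomp_normalize := repeat (erewrite <- hcompA_typed by typecheck).

Lemma whisk_whisk I u u' v v' x m n : typed I x m n -> whisk I u (whisk I u' x v') v = whisk I (u ++ u') x (v' ++ v).
Proof.
  intros. unfold whisk.
  rewrite <- (idw_app I u u'), <- (idw_app I v' v).
  hcomp_normalize. reflexivity.
Qed.

Ltac absorb_ids := repeat (rewrite idw_idem || rewrite sb_idem || (erewrite comp_idw by (typecheck||word_eq)) || (erewrite idw_comp by (typecheck||word_eq))).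

Lemma whisk_slide I u v1 v2 x y a b c d : typed I x a b -> typed I y c d ->
 vcomp (whisk I u x (v1 ++ d ++ v2)) (whisk I (u ++ a ++ v1) y v2)
 = vcomp (whisk I (u ++ b ++ v1) y v2) (whisk I u x (v1 ++ c ++ v2)).
Proof.
  intros. unfold whisk. rewrite <- !idw_app. hcomp_normalize.
  repeat (erewrite interchange_typed by typecheck). absorb_ids. reflexivity.
Qed.

Lemma whisk_nil_l I x v m n : typed I x m n -> whisk I [] x v = hcomp x (idw I v).
Proof.
  intros Hx. unfold whisk. rewrite idw_nil.
  replace (id1 A) with (id1 (cod1 (src2 (hcomp x (idw I v))))).
  apply hcomp_id2l. erewrite typed_src by typecheck. rewrite word_cod; auto.
Qed.
Lemma whisk_nil_r I x u m n : typed I x m n -> whisk I u x [] = hcomp (idw I u) x.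
Proof.
  intros Hx. unfold whisk. rewrite idw_nil.
  replace (id1 A) with (id1 (dom1 (src2 x))).
  rewrite hcomp_id2r; auto. erewrite typed_src by typecheck. rewrite word_dom; auto.
Qed.

Lemma whisk_vcomp_split I I' U V a b r m n k p q : typed I a m n -> typed I b k m -> typed I' r p q -> q = U ++ k ++ V ->
  vcomp (whisk I U (vcomp a b) V) r = vcomp (whisk I U a V) (vcomp (whisk I U b V) r).
Proof.
  intros; subst. erewrite <- whisk_vcomp by typecheck. erewrite vcompA_typed by typecheck. reflexivity.
Qed.

Lemma whisk_idw I U V m : whisk I U (idw I m) V = idw I (U ++ m ++ V).
Proof. unfold whisk. rewrite !idw_app. reflexivity. Qed.

Lemma whisk_nil_intro I x m n : typed I x m n -> x = whisk I [] x [].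
Proof. intros; symmetry; eapply whisk_nil; eauto. Qed.

Ltac word_normalize := repeat rewrite app_nil_r; repeat rewrite <- app_assoc; cbn [app].
Ltac word_normalize_in H := repeat rewrite app_nil_r in H; repeat rewrite <- app_assoc in H; cbn [app] in H.
Ltac vcomp_normalize := repeat (erewrite <- vcompA_typed by typecheck).
Ltac unwhisk := repeat (first [erewrite whisk_vcomp_split; [ | try solve [typecheck] .. ]; [ | solve [word_eq] .. ]
   | erewrite whisk_whisk; [ | try solve [typecheck] .. ]; [ | solve [word_eq] .. ]
   | rewrite whisk_idw]); word_normalize.
Ltac unwhisk_in H := repeat (first [erewrite whisk_vcomp_split in H; [ | try solve [typecheck] .. ]; [ | solve [word_eq] .. ]
   | erewrite whisk_whisk in H; [ | try solve [typecheck] .. ]; [ | solve [word_eq] .. ]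
   | rewrite whisk_idw in H]); word_normalize_in H.
Tactic Notation "rw" open_constr(e) := erewrite e; [ | try solve [typecheck] .. ]; [ | solve [word_eq] .. ]; word_normalize.
Tactic Notation "rwb" open_constr(e) := erewrite <- e; [ | try solve [typecheck] .. ]; [ | solve [word_eq] .. ]; word_normalize.
Ltac absorb_idw := repeat (erewrite idw_comp; [ | try solve [typecheck] .. ]; [ | solve [word_eq] .. ]); word_normalize.

Ltac in_context Heq U V r :=
  let Hctx := fresh "Hctx" in subst;
  pose proof (f_equal (fun z => vcomp (whisk_bar U z V) r) Heq) as Hctx; cbv beta in Hctx;
  unwhisk_in Hctx; word_normalize; rewrite Hctx; try absorb_idw; try reflexivity.

(* Context lemmas are equations [vcomp (whisk U x V) (... r) = ...] for
   arbitrary words U, V and an arbitrary 2-cell r underneath.  Word positions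
   are passed as equations so that [rw]/[rwb] can instantiate them by
   unification and close them with [word_eq]. *)
Lemma slide_lr I I' x y v1 u U V v2 U' V' a b c d r p q : typed I x a b -> typed I y c d -> typed I' r p q ->
  U = u ++ a ++ v1 -> V = v1 ++ d ++ v2 -> U' = u ++ b ++ v1 -> V' = v1 ++ c ++ v2 ->
  q = u ++ a ++ v1 ++ c ++ v2 ->
  vcomp (whisk I u x V) (vcomp (whisk I U y v2) r) = vcomp (whisk I U' y v2) (vcomp (whisk I u x V') r).
Proof.
  intros; subst. erewrite vcompA_typed by typecheck. erewrite whisk_slide by eassumption. erewrite <- vcompA_typed by typecheck. reflexivity.
Qed.
Lemma slide_rl I I' x y v1 u U V v2 U' V' a b c d r p q : typed I x a b -> typed I y c d -> typed I' r p q ->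
  U = u ++ b ++ v1 -> V = v1 ++ c ++ v2 -> V' = v1 ++ d ++ v2 -> U' = u ++ a ++ v1 ->
  q = u ++ a ++ v1 ++ c ++ v2 ->
  vcomp (whisk I U y v2) (vcomp (whisk I u x V) r) = vcomp (whisk I u x V') (vcomp (whisk I U' y v2) r).
Proof.
  intros; subst. erewrite vcompA_typed by typecheck. erewrite <- whisk_slide by eassumption. erewrite <- vcompA_typed by typecheck. reflexivity.
Qed.
Lemma monad_assoc i U V U1 V1 U2 V2 r p q : typed_bar r p q -> U1 = U -> V1 = i :: V -> U2 = U ++ [i] -> V2 = V ->
  q = U ++ i :: i :: i :: V ->
  vcomp (whisk_bar U (mu i) V) (vcomp (whisk_bar U1 (mu i) V1) r)
  = vcomp (whisk_bar U (mu i) V) (vcomp (whisk_bar U2 (mu i) V2) r).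
Proof.
  intros Hr ? ? ? ? ?.
  assert (Heq := bm_assoc _ _ (monad i)). fold (mu i) (sb i) in Heq.
  change (sb i) with (idw Ibar [i]) in Heq.
  erewrite <- whisk_nil_l, <- whisk_nil_r in Heq by typecheck.
  rewrite (whisk_nil_intro Ibar (mu i) [i;i] [i] (typed_mu i)) in Heq at 1.
  rewrite (whisk_nil_intro Ibar (mu i) [i;i] [i] (typed_mu i)) in Heq at 3.
  in_context Heq U V r.
Qed.

Lemma monad_unit_l i U V U1 V1 r p q : typed_bar r p q -> U1 = U ++ [i] -> V1 = V -> q = U ++ i :: V ->
  vcomp (whisk_bar U (mu i) V) (vcomp (whisk_bar U1 (eta i) V1) r) = r.
Proof.
  intros Hr ? ? ?.
  assert (Heq := bm_unit_l _ _ (monad i)). fold (mu i) (sb i) (eta i) in Heq.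
  change (sb i) with (idw Ibar [i]) in Heq.
  erewrite <- whisk_nil_r in Heq by typecheck.
  rewrite (whisk_nil_intro Ibar (mu i) [i;i] [i] (typed_mu i)) in Heq.
  in_context Heq U V r.
Qed.
Lemma monad_unit_r i U V U1 V1 r p q : typed_bar r p q -> U1 = U -> V1 = i :: V -> q = U ++ i :: V ->
  vcomp (whisk_bar U (mu i) V) (vcomp (whisk_bar U1 (eta i) V1) r) = r.
Proof.
  intros Hr ? ? ?.
  assert (Heq := bm_unit_r _ _ (monad i)). fold (mu i) (sb i) (eta i) in Heq.
  change (sb i) with (idw Ibar [i]) in Heq.
  erewrite <- whisk_nil_l in Heq by typecheck.
  rewrite (whisk_nil_intro Ibar (mu i) [i;i] [i] (typed_mu i)) in Heq.
  in_context Heq U V r.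
Qed.

Ltac to_whisk Heq :=
  repeat (rewrite idw_app in Heq; cbn [app] in Heq);
  repeat (erewrite <- whisk_nil_l in Heq by typecheck);
  repeat (erewrite <- whisk_nil_r in Heq by typecheck).

Section WeakDistributiveLaw.
Variables i j : nat.
Variable lam : c2 K.
Hypothesis Hw : is_wdl (monad j) (monad i) lam.

Lemma typed_wdl : typed_bar lam [j; i] [i; j].
Proof.
  unfold is_wdl in Hw; cbv zeta in Hw.
  destruct Hw as (H1 & H2 & H3 & H4 & _). repeat split; auto.
Qed.

Ltac wdl_axiom n :=
  let H := fresh "Heq" in
  pose proof Hw as H; unfold is_wdl in H; cbv zeta in H;
  do n (apply proj2 in H); try apply proj1 in H;
  fold (mu i) (mu j) (sb i) (sb j) (eta i) (eta j) in H;
  change (sb i) with (idw Ibar [i]) in H; change (sb j) with (idw Ibar [j]) in H;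
  pose proof typed_wdl;
  to_whisk H;
  rewrite (whisk_nil_intro Ibar lam [j;i] [i;j] typed_wdl) in H at 1.

Lemma wdl_mu_t U V U1 V1 U2 V2 U3 V3 U4 V4 r p q : typed_bar r p q ->
  U1 = U -> V1 = i :: V -> U2 = U ++ [i] -> V2 = V -> U3 = U -> V3 = j :: V ->
  U4 = U ++ [j] -> V4 = V -> q = U ++ j :: j :: i :: V ->
  vcomp (whisk_bar U lam V) (vcomp (whisk_bar U1 (mu j) V1) r)
  = vcomp (whisk_bar U2 (mu j) V2) (vcomp (whisk_bar U3 lam V3) (vcomp (whisk_bar U4 lam V4) r)).
Proof. intros. wdl_axiom ltac:(4). in_context Heq U V r. Qed.

Lemma wdl_mu_s U V U1 V1 U2 V2 U3 V3 U4 V4 r p q : typed_bar r p q ->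
  U1 = U ++ [j] -> V1 = V -> U2 = U -> V2 = j :: V -> U3 = U ++ [i] -> V3 = V ->
  U4 = U -> V4 = i :: V -> q = U ++ j :: i :: i :: V ->
  vcomp (whisk_bar U lam V) (vcomp (whisk_bar U1 (mu i) V1) r)
  = vcomp (whisk_bar U2 (mu i) V2) (vcomp (whisk_bar U3 lam V3) (vcomp (whisk_bar U4 lam V4) r)).
Proof. intros. wdl_axiom ltac:(5). in_context Heq U V r. Qed.

Lemma wdl_eta_t U V U1 V1 U2 V2 U3 V3 U4 V4 U5 V5 r p q : typed_bar r p q ->
  U1 = U -> V1 = i :: V -> U2 = U -> V2 = j :: V -> U3 = U ++ [i] -> V3 = V ->
  U4 = U ++ [i; j] -> V4 = V -> U5 = U ++ [i] -> V5 = V -> q = U ++ i :: V ->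
  vcomp (whisk_bar U lam V) (vcomp (whisk_bar U1 (eta j) V1) r)
  = vcomp (whisk_bar U2 (mu i) V2) (vcomp (whisk_bar U3 lam V3) (vcomp (whisk_bar U4 (eta i) V4)
      (vcomp (whisk_bar U5 (eta j) V5) r))).
Proof. intros. wdl_axiom ltac:(6). in_context Heq U V r. Qed.

Lemma wdl_eta_s U V U1 V1 U2 V2 U3 V3 U4 V4 U5 V5 r p q : typed_bar r p q ->
  U1 = U ++ [j] -> V1 = V -> U2 = U ++ [i] -> V2 = V -> U3 = U -> V3 = j :: V ->
  U4 = U -> V4 = i :: j :: V -> U5 = U -> V5 = j :: V -> q = U ++ j :: V ->
  vcomp (whisk_bar U lam V) (vcomp (whisk_bar U1 (eta i) V1) r)
  = vcomp (whisk_bar U2 (mu j) V2) (vcomp (whisk_bar U3 lam V3) (vcomp (whisk_bar U4 (eta j) V4)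
      (vcomp (whisk_bar U5 (eta i) V5) r))).
Proof. intros. wdl_axiom ltac:(7). in_context Heq U V r. Qed.

End WeakDistributiveLaw.

(** * The idempotent attached to a law *)

Section BarLeft.
Variable i : nat.
Variable w : list nat.
Variable Lam : c2 K.
Hypothesis Hty : typed_bar Lam (w ++ [i]) (i :: w).
Hypothesis Hlaw_mu : forall U V U1 V1 U2 V2 U3 V3 U4 V4 r p q, typed_bar r p q ->
  U1 = U ++ w -> V1 = V -> U2 = U -> V2 = w ++ V -> U3 = U ++ [i] -> V3 = V ->
  U4 = U -> V4 = i :: V -> q = U ++ w ++ i :: i :: V ->
  vcomp (whisk_bar U Lam V) (vcomp (whisk_bar U1 (mu i) V1) r)
  = vcomp (whisk_bar U2 (mu i) V2) (vcomp (whisk_bar U3 Lam V3) (vcomp (whisk_bar U4 Lam V4) r)).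

Definition barL : c2 K := vcomp (whisk_bar [] (mu i) w) (vcomp (whisk_bar [i] Lam []) (whisk_bar (i :: w) (eta i) [])).

Lemma typed_barL : typed_bar barL (i :: w) (i :: w).
Proof. unfold barL. typecheck. Qed.

Lemma barL_unfold U V U1 V1 U2 V2 U3 V3 r p q : typed_bar r p q ->
  U1 = U -> V1 = w ++ V -> U2 = U ++ [i] -> V2 = V -> U3 = U ++ i :: w -> V3 = V ->
  q = U ++ i :: w ++ V ->
  vcomp (whisk_bar U barL V) r
  = vcomp (whisk_bar U1 (mu i) V1) (vcomp (whisk_bar U2 Lam V2) (vcomp (whisk_bar U3 (eta i) V3) r)).
Proof. intros; subst. unfold barL. unwhisk. reflexivity. Qed.

Lemma barL_law U V U' V' r p q : typed_bar r p q -> U' = U -> V' = V -> q = U ++ w ++ i :: V ->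
  vcomp (whisk_bar U barL V) (vcomp (whisk_bar U' Lam V') r) = vcomp (whisk_bar U' Lam V') r.
Proof.
  intros; subst.
  rw barL_unfold.
  rw (slide_rl _ _ Lam (eta i) []).
  rwb Hlaw_mu.
  rw monad_unit_l. reflexivity.
Qed.

Lemma barL_mu U V U1 V1 U2 V2 U3 V3 r p q : typed_bar r p q -> U1 = U -> V1 = w ++ V ->
  U2 = U -> V2 = w ++ V -> U3 = U ++ [i] -> V3 = V -> q = U ++ i :: i :: w ++ V ->
  vcomp (whisk_bar U barL V) (vcomp (whisk_bar U1 (mu i) V1) r)
  = vcomp (whisk_bar U2 (mu i) V2) (vcomp (whisk_bar U3 barL V3) r).
Proof.
  intros; subst. pose proof typed_barL.
  rw barL_unfold.
  rw (slide_rl _ _ (mu i) (eta i) w).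
  rw (slide_rl _ _ (mu i) Lam []).
  rw monad_assoc.
  rwb barL_unfold. reflexivity.
Qed.

Lemma barL_idem U V U1 V1 r p q : typed_bar r p q -> U1 = U -> V1 = V -> q = U ++ i :: w ++ V ->
  vcomp (whisk_bar U barL V) (vcomp (whisk_bar U1 barL V1) r) = vcomp (whisk_bar U barL V) r.
Proof.
  intros; subst. pose proof typed_barL.
  rw (barL_unfold U V _ _ _ _ _ _ r).
  rw barL_mu. rw barL_law. rwb barL_unfold. reflexivity.
Qed.

Lemma barL_eta U V U1 V1 U2 V2 U3 V3 r p q : typed_bar r p q -> U1 = U -> V1 = w ++ V ->
  U2 = U -> V2 = V -> U3 = U ++ w -> V3 = V -> q = U ++ w ++ V ->
  vcomp (whisk_bar U barL V) (vcomp (whisk_bar U1 (eta i) V1) r)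
  = vcomp (whisk_bar U2 Lam V2) (vcomp (whisk_bar U3 (eta i) V3) r).
Proof.
  intros; subst. pose proof typed_barL.
  rw barL_unfold.
  rw (slide_rl _ _ (eta i) (eta i) w).
  rw (slide_rl _ _ (eta i) Lam []).
  rw monad_unit_r. reflexivity.
Qed.

Lemma mu_law_barL U V U1 V1 U2 V2 U3 V3 r p q : typed_bar r p q -> U1 = U -> V1 = w ++ V ->
  U2 = U ++ [i] -> V2 = V -> U3 = U -> V3 = i :: V -> q = U ++ i :: w ++ i :: V ->
  vcomp (whisk_bar U1 (mu i) V1) (vcomp (whisk_bar U2 Lam V2) (vcomp (whisk_bar U3 barL V3) r))
  = vcomp (whisk_bar U1 (mu i) V1) (vcomp (whisk_bar U2 Lam V2) r).
Proof.
  intros; subst. pose proof typed_barL.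
  rw barL_unfold.
  rw (slide_rl _ _ (mu i) Lam []).
  rw monad_assoc.
  rwb Hlaw_mu.
  rw monad_unit_r. reflexivity.
Qed.

End BarLeft.

Section BarRight.
Variable i : nat.
Variable w : list nat.
Variable Lam : c2 K.
Hypothesis Hty : typed_bar Lam (i :: w) (w ++ [i]).
Hypothesis Hlaw_mu : forall U V U1 V1 U2 V2 U3 V3 U4 V4 r p q, typed_bar r p q ->
  U1 = U -> V1 = w ++ V -> U2 = U ++ w -> V2 = V -> U3 = U -> V3 = i :: V ->
  U4 = U ++ [i] -> V4 = V -> q = U ++ i :: i :: w ++ V ->
  vcomp (whisk_bar U Lam V) (vcomp (whisk_bar U1 (mu i) V1) r)
  = vcomp (whisk_bar U2 (mu i) V2) (vcomp (whisk_bar U3 Lam V3) (vcomp (whisk_bar U4 Lam V4) r)).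

Definition barR : c2 K := vcomp (whisk_bar w (mu i) []) (vcomp (whisk_bar [] Lam [i]) (whisk_bar [] (eta i) (w ++ [i]))).

Lemma typed_barR : typed_bar barR (w ++ [i]) (w ++ [i]).
Proof. unfold barR. typecheck. Qed.

Lemma barR_unfold U V U1 V1 U2 V2 U3 V3 r p q : typed_bar r p q ->
  U1 = U ++ w -> V1 = V -> U2 = U -> V2 = i :: V -> U3 = U -> V3 = w ++ i :: V ->
  q = U ++ w ++ i :: V ->
  vcomp (whisk_bar U barR V) r
  = vcomp (whisk_bar U1 (mu i) V1) (vcomp (whisk_bar U2 Lam V2) (vcomp (whisk_bar U3 (eta i) V3) r)).
Proof. intros; subst. unfold barR. unwhisk. reflexivity. Qed.

Lemma barR_law U V U' V' r p q : typed_bar r p q -> U' = U -> V' = V -> q = U ++ i :: w ++ V ->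
  vcomp (whisk_bar U barR V) (vcomp (whisk_bar U' Lam V') r) = vcomp (whisk_bar U' Lam V') r.
Proof.
  intros; subst.
  rw barR_unfold.
  rw (slide_lr _ _ (eta i) Lam []).
  rwb Hlaw_mu.
  rw monad_unit_r. reflexivity.
Qed.

Lemma barR_mu U V U1 V1 U2 V2 U3 V3 r p q : typed_bar r p q -> U1 = U ++ w -> V1 = V ->
  U2 = U ++ w -> V2 = V -> U3 = U -> V3 = i :: V -> q = U ++ w ++ i :: i :: V ->
  vcomp (whisk_bar U barR V) (vcomp (whisk_bar U1 (mu i) V1) r)
  = vcomp (whisk_bar U2 (mu i) V2) (vcomp (whisk_bar U3 barR V3) r).
Proof.
  intros; subst. pose proof typed_barR.
  rw barR_unfold.
  rw (slide_lr _ _ (eta i) (mu i) w).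
  rw (slide_lr _ _ Lam (mu i) []).
  rwb monad_assoc.
  rwb barR_unfold. reflexivity.
Qed.

Lemma barR_idem U V U1 V1 r p q : typed_bar r p q -> U1 = U -> V1 = V -> q = U ++ w ++ i :: V ->
  vcomp (whisk_bar U barR V) (vcomp (whisk_bar U1 barR V1) r) = vcomp (whisk_bar U barR V) r.
Proof.
  intros; subst. pose proof typed_barR.
  rw (barR_unfold U V _ _ _ _ _ _ r).
  rw barR_mu. rw barR_law. rwb barR_unfold. reflexivity.
Qed.

Lemma barR_eta U V U1 V1 U2 V2 U3 V3 r p q : typed_bar r p q -> U1 = U ++ w -> V1 = V ->
  U2 = U -> V2 = V -> U3 = U -> V3 = w ++ V -> q = U ++ w ++ V ->
  vcomp (whisk_bar U barR V) (vcomp (whisk_bar U1 (eta i) V1) r)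
  = vcomp (whisk_bar U2 Lam V2) (vcomp (whisk_bar U3 (eta i) V3) r).
Proof.
  intros; subst. pose proof typed_barR.
  rw barR_unfold.
  rw (slide_lr _ _ (eta i) (eta i) w).
  rw (slide_lr _ _ Lam (eta i) []).
  rw monad_unit_l. reflexivity.
Qed.

Lemma mu_law_barR U V U1 V1 U2 V2 U3 V3 r p q : typed_bar r p q -> U1 = U ++ w -> V1 = V ->
  U2 = U -> V2 = i :: V -> U3 = U ++ [i] -> V3 = V -> q = U ++ i :: w ++ i :: V ->
  vcomp (whisk_bar U1 (mu i) V1) (vcomp (whisk_bar U2 Lam V2) (vcomp (whisk_bar U3 barR V3) r))
  = vcomp (whisk_bar U1 (mu i) V1) (vcomp (whisk_bar U2 Lam V2) r).
Proof.
  intros; subst. pose proof typed_barR.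
  rw barR_unfold.
  rw (slide_lr _ _ Lam (mu i) []).
  rwb monad_assoc.
  rwb Hlaw_mu.
  rw monad_unit_l. reflexivity.
Qed.

End BarRight.

Section BarLeftRight.
Variables i j : nat.
Variable lam : c2 K.
Hypothesis Hw : is_wdl (monad j) (monad i) lam.

Lemma barL_barR U V r p q : typed_bar r p q -> q = U ++ i :: j :: V ->
  vcomp (whisk_bar U (barL i [j] lam) V) r = vcomp (whisk_bar U (barR j [i] lam) V) r.
Proof.
  intros; subst. pose proof (typed_wdl _ _ _ Hw).
  rw barL_unfold.
  rw (wdl_eta_s _ _ _ Hw).
  rw (slide_lr _ _ (mu i) (mu j) []).
  rw (slide_lr _ _ (eta j) (eta i) []).
  rwb (wdl_eta_t _ _ _ Hw).
  rwb barR_unfold. reflexivity.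
Qed.
End BarLeftRight.

Lemma whisk_bar_K U V x m n : typed_bar x m n ->
  whisk_bar U x V = vcomp (whisk_K U x V) (vcomp (whisk_K [] (idw Ibar U) (m ++ V)) (whisk_K (U ++ m) (idw Ibar V) [])).
Proof.
  intros.
  erewrite (whisk_nil_l IK (idw Ibar U)), (whisk_nil_r IK (idw Ibar V)) by typecheck.
  unfold whisk. rewrite <- !idw_app. hcomp_normalize.
  repeat (erewrite interchange_typed by typecheck). absorb_ids. reflexivity.
Qed.
Lemma whisk_bar_K' U V x m n : typed_bar x m n ->
  whisk_bar U x V = vcomp (whisk_K [] (idw Ibar U) (n ++ V)) (vcomp (whisk_K (U ++ n) (idw Ibar V) []) (whisk_K U x V)).
Proof.
  intros.
  erewrite (whisk_nil_l IK (idw Ibar U)), (whisk_nil_r IK (idw Ibar V)) by typecheck.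
  unfold whisk. rewrite <- !idw_app. hcomp_normalize.
  repeat (erewrite interchange_typed by typecheck). absorb_ids. reflexivity.
Qed.

Lemma idw_comp_sb_K k a b : vcomp (idw Ibar (a ++ k :: b)) (whisk_K a (sb k) b) = idw Ibar (a ++ k :: b).
Proof.
  change (idw Ibar (a ++ k :: b)) with (idw Ibar (a ++ [k] ++ b)).
  rewrite <- !idw_app. change (idw Ibar [k]) with (sb k). unfold whisk.
  repeat (erewrite interchange_typed by typecheck). absorb_ids. cbn [app]. reflexivity.
Qed.
Lemma sb_K_comp_idw k a b : vcomp (whisk_K a (sb k) b) (idw Ibar (a ++ k :: b)) = idw Ibar (a ++ k :: b).
Proof.
  change (idw Ibar (a ++ k :: b)) with (idw Ibar (a ++ [k] ++ b)).
  rewrite <- !idw_app. change (idw Ibar [k]) with (sb k). unfold whisk.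
  repeat (erewrite interchange_typed by typecheck). absorb_ids. cbn [app]. reflexivity.
Qed.

Lemma absorb_sb_src a x U V U1 V1 k b m n r p q : typed_bar x m n -> typed_K r p q ->
  U1 = U ++ a -> m = a ++ k :: b -> V1 = b ++ V -> q = U ++ m ++ V ->
  vcomp (whisk_K U x V) (vcomp (whisk_K U1 (sb k) V1) r) = vcomp (whisk_K U x V) r.
Proof.
  intros; subst.
  erewrite vcompA_typed by typecheck. f_equal.
  erewrite <- whisk_whisk by typecheck. erewrite whisk_vcomp by typecheck. f_equal.
  erewrite <- (comp_idw Ibar x) at 1 by (typecheck || word_eq). erewrite <- vcompA_typed by typecheck.
  rewrite idw_comp_sb_K. erewrite comp_idw by (typecheck || word_eq). reflexivity.
Qed.

Lemma absorb_sb_tgt a x U V U1 V1 k b m n r p q : typed_bar x m n -> typed_K r p q ->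
  U1 = U ++ a -> n = a ++ k :: b -> V1 = b ++ V -> q = U ++ m ++ V ->
  vcomp (whisk_K U1 (sb k) V1) (vcomp (whisk_K U x V) r) = vcomp (whisk_K U x V) r.
Proof.
  intros; subst.
  erewrite vcompA_typed by typecheck. f_equal.
  erewrite <- whisk_whisk by typecheck. erewrite whisk_vcomp by typecheck. f_equal.
  erewrite <- (idw_comp Ibar x) at 1 by (typecheck || word_eq). erewrite vcompA_typed by typecheck.
  rewrite sb_K_comp_idw. erewrite idw_comp by (typecheck || word_eq). reflexivity.
Qed.

Lemma idw_split_K P Q k a r p q : typed_K r p q -> q = P ++ k :: a ++ Q ->
  vcomp (whisk_K P (idw Ibar (k :: a)) Q) r
  = vcomp (whisk_K P (sb k) (a ++ Q)) (vcomp (whisk_K (P ++ [k]) (idw Ibar a) Q) r).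
Proof.
  intros; subst. erewrite vcompA_typed by typecheck. f_equal.
  change (idw Ibar (k :: a)) with (idw Ibar ([k] ++ a)).
  rewrite <- (idw_app Ibar [k] a). change (idw Ibar [k]) with (sb k).
  unfold whisk. rewrite <- !idw_app. hcomp_normalize.
  repeat (erewrite interchange_typed by typecheck). absorb_ids. reflexivity.
Qed.

Lemma idw_nil_K P Q r p q : typed_K r p q -> q = P ++ Q -> vcomp (whisk_K P (idw Ibar []) Q) r = r.
Proof.
  intros; subst. change (idw Ibar []) with (idw IK []). rewrite whisk_idw.
  erewrite idw_comp by (typecheck || word_eq). reflexivity.
Qed.

Lemma whisk_bar_K_comp U V x m n r p q : typed_bar x m n -> typed_K r p q -> q = U ++ m ++ V ->
  vcomp (whisk_bar U x V) r = vcomp (whisk_K U x V) (vcomp (whisk_K [] (idw Ibar U) (m ++ V)) (vcomp (whisk_K (U ++ m) (idw Ibar V) []) r)).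
Proof. intros; subst. erewrite whisk_bar_K by eauto. vcomp_normalize. reflexivity. Qed.
Lemma whisk_bar_K_comp' U V x m n r p q : typed_bar x m n -> typed_K r p q -> q = U ++ m ++ V ->
  vcomp (whisk_bar U x V) r = vcomp (whisk_K [] (idw Ibar U) (n ++ V)) (vcomp (whisk_K (U ++ n) (idw Ibar V) []) (vcomp (whisk_K U x V) r)).
Proof. intros; subst. erewrite whisk_bar_K' by eauto. vcomp_normalize. reflexivity. Qed.
Lemma eq_of_comp_idw I x y u v : typed I x u v -> typed I y u v -> vcomp x (idw I u) = vcomp y (idw I u) -> x = y.
Proof. intros Hx Hy Heq. erewrite !comp_idw in Heq by (typecheck || word_eq). exact Heq. Qed.

Lemma sb_K_idem U V k r p q : typed_K r p q -> q = U ++ k :: V ->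
  vcomp (whisk_K U (sb k) V) (vcomp (whisk_K U (sb k) V) r) = vcomp (whisk_K U (sb k) V) r.
Proof.
  intros; subst. erewrite vcompA_typed by typecheck. f_equal. erewrite whisk_vcomp by typecheck. rewrite sb_idem. reflexivity.
Qed.

Ltac split_idw := repeat (first [ rw idw_nil_K | rw idw_split_K ]).

(** * The arrows as idempotents of composite laws *)

Section RightArrow.
Variables pi qi : nat.
Variables l0p l0q : c2 K.
Hypothesis Hp : is_wdl (monad pi) (monad 0) l0p.
Hypothesis Hq : is_wdl (monad qi) (monad 0) l0q.

Definition lawR : c2 K := vcomp (whisk_bar [] l0p [qi]) (whisk_bar [pi] l0q []).

Lemma typed_lawR : typed_bar lawR [pi; qi; 0] [0; pi; qi].
Proof. pose proof (typed_wdl _ _ _ Hp); pose proof (typed_wdl _ _ _ Hq). unfold lawR. typecheck. Qed.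

Lemma lawR_unfold I U V U1 V1 U2 V2 r p q : typed I r p q -> U1 = U -> V1 = qi :: V -> U2 = U ++ [pi] -> V2 = V ->
  q = U ++ pi :: qi :: 0 :: V ->
  vcomp (whisk_bar U lawR V) r = vcomp (whisk_bar U1 l0p V1) (vcomp (whisk_bar U2 l0q V2) r).
Proof.
  pose proof (typed_wdl _ _ _ Hp); pose proof (typed_wdl _ _ _ Hq).
  intros; subst. unfold lawR. unwhisk. reflexivity.
Qed.

(* After rewriting the K-whiskerings through the idempotents sbar_i, each
   sbar_i is slid next to a cell that absorbs it. *)
Lemma lam_right_barL : lam_right S0 (monad pi) (monad qi) l0p l0q = barL 0 [pi; qi] lawR.
Proof.
  pose proof (typed_wdl _ _ _ Hp); pose proof (typed_wdl _ _ _ Hq). pose proof typed_lawR.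
  unfold lam_right, wl, wr.
  change (vcomp (hcomp (mu 0) (idw IK [pi;qi])) (vcomp (whisk_K [0] l0p [qi])
    (vcomp (hcomp (idw IK [0]) (hcomp (idw IK [pi]) l0q)) (hcomp (idw IK [0;pi;qi]) (eta 0))))
    = barL 0 [pi; qi] lawR).
  erewrite <- (whisk_nil_l IK (mu 0)), <- (whisk_nil_r IK (eta 0)), <- (whisk_nil_r IK l0q), <- (whisk_nil_r IK (whisk_K [pi] l0q [])) by typecheck.
  erewrite whisk_whisk by typecheck. cbn [app].
  apply eq_of_comp_idw with IK [0;pi;qi] [0;pi;qi]; [typecheck | unfold barL; typecheck | ].
  unfold barL. vcomp_normalize.
  rw lawR_unfold.
  rw (whisk_bar_K_comp' [0;pi;qi] [] (eta 0)). split_idw.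
  rw (whisk_bar_K_comp' [0;pi] [] l0q). split_idw.
  rw (whisk_bar_K_comp' [0] [qi] l0p). split_idw.
  rw (whisk_bar_K_comp [] [pi;qi] (mu 0)). split_idw.
  rw (slide_rl _ _ (sb 0) (sb qi)). rw (slide_rl _ _ (sb 0) (sb pi)). rw (absorb_sb_src _ (mu 0)). rw sb_K_idem.
  rw (slide_rl _ _ l0p (sb qi)). rw (absorb_sb_tgt _ l0p).
  rw (slide_rl _ _ (sb 0) (sb qi)). rw (slide_rl _ _ (sb 0) l0p). rw (absorb_sb_src _ (mu 0)).
  rw (slide_rl _ _ (sb pi) (sb qi)). rw (absorb_sb_src _ l0p).
  rw (absorb_sb_tgt _ l0q).
  rw (slide_rl _ _ (sb 0) l0q). rw (slide_rl _ _ (sb 0) l0p). rw (absorb_sb_src _ (mu 0)).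
  rw (slide_rl _ _ (sb pi) l0q). rw (absorb_sb_src _ l0p).
  rw (absorb_sb_src _ l0q).
  reflexivity.
Qed.

Lemma lawR_mu : forall U V U1 V1 U2 V2 U3 V3 U4 V4 r p q, typed_bar r p q ->
  U1 = U ++ [pi; qi] -> V1 = V -> U2 = U -> V2 = [pi; qi] ++ V -> U3 = U ++ [0] -> V3 = V ->
  U4 = U -> V4 = 0 :: V -> q = U ++ [pi; qi] ++ 0 :: 0 :: V ->
  vcomp (whisk_bar U lawR V) (vcomp (whisk_bar U1 (mu 0) V1) r)
  = vcomp (whisk_bar U2 (mu 0) V2) (vcomp (whisk_bar U3 lawR V3) (vcomp (whisk_bar U4 lawR V4) r)).
Proof.
  pose proof (typed_wdl _ _ _ Hp); pose proof (typed_wdl _ _ _ Hq). pose proof typed_lawR.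
  intros; subst. word_normalize.
  repeat rw lawR_unfold.
  rw (wdl_mu_s _ _ _ Hq). rw (wdl_mu_s _ _ _ Hp).
  rw (slide_lr _ _ l0p l0q []).
  reflexivity.
Qed.

Definition Rcell : c2 K := barL 0 [pi; qi] lawR.
Definition bar0p : c2 K := barL 0 [pi] l0p.
Definition bar0q : c2 K := barL 0 [qi] l0q.

Lemma typed_Rcell : typed_bar Rcell [0; pi; qi] [0; pi; qi].
Proof. apply typed_barL. apply typed_lawR. Qed.
Lemma typed_bar0p : typed_bar bar0p [0; pi] [0; pi].
Proof. apply typed_barL. apply (typed_wdl _ _ _ Hp). Qed.
Lemma typed_bar0q : typed_bar bar0q [0; qi] [0; qi].
Proof. apply typed_barL. apply (typed_wdl _ _ _ Hq). Qed.

Ltac cell_types := pose proof (typed_wdl _ _ _ Hp) as TP; pose proof (typed_wdl _ _ _ Hq) as TQ; pose proof typed_lawR as TLR;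
  pose proof typed_Rcell as TR; pose proof typed_bar0p as TBP; pose proof typed_bar0q as TBQ.

Lemma Rcell_lam0p U V U1 V1 U2 V2 U3 V3 r p q : typed_bar r p q -> U1 = U -> V1 = qi :: V ->
  U2 = U -> V2 = qi :: V -> U3 = U ++ [pi] -> V3 = V -> q = U ++ pi :: 0 :: qi :: V ->
  vcomp (whisk_bar U Rcell V) (vcomp (whisk_bar U1 l0p V1) r) = vcomp (whisk_bar U2 l0p V2) (vcomp (whisk_bar U3 bar0q V3) r).
Proof.
  cell_types. intros; subst. unfold Rcell, bar0q.
  rw (barL_unfold 0 [pi;qi] lawR TLR).
  rw lawR_unfold.
  rw (slide_rl _ _ l0p (eta 0) [qi]).
  rw (slide_rl _ _ l0p l0q []).
  rwb (wdl_mu_s _ _ _ Hp).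
  rwb (barL_unfold 0 [qi] l0q TQ).
  reflexivity.
Qed.

Lemma bar0p_Rcell U V U1 V1 r p q : typed_bar r p q -> U1 = U -> V1 = qi :: V -> q = U ++ 0 :: pi :: qi :: V ->
  vcomp (whisk_bar U1 bar0p V1) (vcomp (whisk_bar U Rcell V) r) = vcomp (whisk_bar U Rcell V) r.
Proof.
  cell_types. intros; subst. unfold Rcell, bar0p.
  rw (barL_unfold 0 [pi;qi] lawR TLR _ _ _ _ _ _ _ _ r).
  rw (barL_mu 0 [pi] l0p TP).
  rw lawR_unfold.
  rw (barL_law 0 [pi] l0p TP (wdl_mu_s _ _ _ Hp)).
  rwb lawR_unfold.
  rwb (barL_unfold 0 [pi;qi] lawR TLR).
  reflexivity.
Qed.

Lemma Rcell_bar0p U V U1 V1 r p q : typed_bar r p q -> U1 = U -> V1 = qi :: V -> q = U ++ 0 :: pi :: qi :: V ->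
  vcomp (whisk_bar U Rcell V) (vcomp (whisk_bar U1 bar0p V1) r) = vcomp (whisk_bar U Rcell V) r.
Proof.
  cell_types. intros; subst. 
  unfold bar0p. rw (barL_unfold 0 [pi] l0p TP). fold bar0p.
  unfold Rcell. rw (barL_mu 0 [pi;qi] lawR TLR). fold Rcell.
  rw Rcell_lam0p. unfold bar0q.
  rw (barL_eta 0 [qi] l0q TQ).
  rwb lawR_unfold. unfold Rcell. rwb (barL_unfold 0 [pi;qi] lawR TLR).
  reflexivity.
Qed.

Lemma Rcell_mu_q U V U1 V1 r p q : typed_bar r p q -> U1 = U ++ [0; pi] -> V1 = V ->
  q = U ++ 0 :: pi :: qi :: qi :: V ->
  vcomp (whisk_bar U Rcell V) (vcomp (whisk_bar U1 (mu qi) V1) r) = vcomp (whisk_bar U1 (mu qi) V1) (vcomp (whisk_bar U Rcell (qi :: V)) r).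
Proof.
  cell_types. pose proof (typed_barR qi [0] l0q TQ). intros; subst. unfold Rcell.
  rw (barL_unfold 0 [pi;qi] lawR TLR _ _ _ _ _ _ _ _ (vcomp (whisk_bar (U ++ [0; pi]) (mu qi) V) r)).
  rw lawR_unfold.
  rw (slide_rl _ _ (mu qi) (eta 0) []).
  rw (wdl_mu_t _ _ _ Hq).
  rw (wdl_eta_s _ _ _ Hq).
  rwb (barR_unfold qi [0] l0q TQ (U ++ [0;pi;qi]) V).
  rw (mu_law_barR qi [0] l0q TQ (wdl_mu_t _ _ _ Hq) (U ++ [0;pi])).
  rw (slide_lr _ _ l0p (mu qi) []).
  rw (slide_lr _ _ (mu 0) (mu qi) [pi]).
  rwb lawR_unfold. rwb (barL_unfold 0 [pi;qi] lawR TLR).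
  reflexivity.
Qed.
End RightArrow.

Section LeftArrow.
Variables ki li : nat.
Variables lk2 ll2 : c2 K.
Hypothesis Hk : is_wdl (monad 2) (monad ki) lk2.
Hypothesis Hl : is_wdl (monad 2) (monad li) ll2.

Definition lawL : c2 K := vcomp (whisk_bar [ki] ll2 []) (whisk_bar [] lk2 [li]).

Lemma typed_lawL : typed_bar lawL [2; ki; li] [ki; li; 2].
Proof. pose proof (typed_wdl _ _ _ Hk); pose proof (typed_wdl _ _ _ Hl). unfold lawL. typecheck. Qed.

Lemma lawL_unfold I U V U1 V1 U2 V2 r p q : typed I r p q -> U2 = U -> V2 = li :: V -> U1 = U ++ [ki] -> V1 = V ->
  q = U ++ 2 :: ki :: li :: V ->
  vcomp (whisk_bar U lawL V) r = vcomp (whisk_bar U1 ll2 V1) (vcomp (whisk_bar U2 lk2 V2) r).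
Proof.
  pose proof (typed_wdl _ _ _ Hk); pose proof (typed_wdl _ _ _ Hl).
  intros; subst. unfold lawL. unwhisk. reflexivity.
Qed.

Lemma lawL_mu : forall U V U1 V1 U2 V2 U3 V3 U4 V4 r p q, typed_bar r p q ->
  U1 = U -> V1 = [ki; li] ++ V -> U2 = U ++ [ki; li] -> V2 = V -> U3 = U -> V3 = 2 :: V ->
  U4 = U ++ [2] -> V4 = V -> q = U ++ 2 :: 2 :: [ki; li] ++ V ->
  vcomp (whisk_bar U lawL V) (vcomp (whisk_bar U1 (mu 2) V1) r)
  = vcomp (whisk_bar U2 (mu 2) V2) (vcomp (whisk_bar U3 lawL V3) (vcomp (whisk_bar U4 lawL V4) r)).
Proof.
  pose proof (typed_wdl _ _ _ Hk); pose proof (typed_wdl _ _ _ Hl). pose proof typed_lawL.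
  intros; subst. word_normalize.
  repeat rw lawL_unfold.
  rw (wdl_mu_t _ _ _ Hk). rw (wdl_mu_t _ _ _ Hl).
  rw (slide_rl _ _ lk2 ll2 []).
  reflexivity.
Qed.

Definition Lcell : c2 K := barR 2 [ki; li] lawL.
Definition bark2 : c2 K := barR 2 [ki] lk2.
Definition barl2 : c2 K := barR 2 [li] ll2.

Lemma typed_Lcell : typed_bar Lcell [ki; li; 2] [ki; li; 2].
Proof. apply typed_barR. apply typed_lawL. Qed.
Lemma typed_bark2 : typed_bar bark2 [ki; 2] [ki; 2].
Proof. apply typed_barR. apply (typed_wdl _ _ _ Hk). Qed.
Lemma typed_barl2 : typed_bar barl2 [li; 2] [li; 2].
Proof. apply typed_barR. apply (typed_wdl _ _ _ Hl). Qed.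

Ltac cell_types := pose proof (typed_wdl _ _ _ Hk) as TK; pose proof (typed_wdl _ _ _ Hl) as TL; pose proof typed_lawL as TLL;
  pose proof typed_Lcell as TLm; pose proof typed_bark2 as TBK; pose proof typed_barl2 as TBL.

Lemma Lcell_lam_l2 U V U1 V1 V2 r p q : typed_bar r p q -> U1 = U ++ [ki] -> V1 = V -> V2 = li :: V ->
  q = U ++ ki :: 2 :: li :: V ->
  vcomp (whisk_bar U Lcell V) (vcomp (whisk_bar U1 ll2 V1) r) = vcomp (whisk_bar U1 ll2 V1) (vcomp (whisk_bar U bark2 V2) r).
Proof.
  cell_types. intros; subst. unfold Lcell, bark2.
  rw (barR_unfold 2 [ki;li] lawL TLL U V).
  rw lawL_unfold.
  rw (slide_lr _ _ (eta 2) ll2 [ki]).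
  rw (slide_lr _ _ lk2 ll2 []).
  rwb (wdl_mu_t _ _ _ Hl (U ++ [ki])).
  rwb (barR_unfold 2 [ki] lk2 TK U (li :: V)).
  reflexivity.
Qed.

Lemma barl2_Lcell U V U1 V1 r p q : typed_bar r p q -> U1 = U ++ [ki] -> V1 = V -> q = U ++ ki :: li :: 2 :: V ->
  vcomp (whisk_bar U1 barl2 V1) (vcomp (whisk_bar U Lcell V) r) = vcomp (whisk_bar U Lcell V) r.
Proof.
  cell_types. intros; subst. unfold Lcell, barl2.
  rw (barR_unfold 2 [ki;li] lawL TLL U V).
  rw (barR_mu 2 [li] ll2 TL (U ++ [ki]) V).
  rw lawL_unfold.
  rw (barR_law 2 [li] ll2 TL (wdl_mu_t _ _ _ Hl)).
  rwb lawL_unfold.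
  rwb (barR_unfold 2 [ki;li] lawL TLL U V).
  reflexivity.
Qed.

Lemma Lcell_barl2 U V U1 V1 r p q : typed_bar r p q -> U1 = U ++ [ki] -> V1 = V -> q = U ++ ki :: li :: 2 :: V ->
  vcomp (whisk_bar U Lcell V) (vcomp (whisk_bar U1 barl2 V1) r) = vcomp (whisk_bar U Lcell V) r.
Proof.
  cell_types. intros; subst.
  unfold barl2. rw (barR_unfold 2 [li] ll2 TL (U ++ [ki]) V). fold barl2.
  unfold Lcell. rw (barR_mu 2 [ki;li] lawL TLL U V). fold Lcell.
  rw Lcell_lam_l2. unfold bark2.
  rw (barR_eta 2 [ki] lk2 TK U (li :: 2 :: V)).
  rwb lawL_unfold. unfold Lcell. rwb (barR_unfold 2 [ki;li] lawL TLL U V).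
  reflexivity.
Qed.

Lemma Lcell_mu_k U V V1 r p q : typed_bar r p q -> V1 = li :: 2 :: V -> q = U ++ ki :: ki :: li :: 2 :: V ->
  vcomp (whisk_bar U Lcell V) (vcomp (whisk_bar U (mu ki) V1) r) = vcomp (whisk_bar U (mu ki) V1) (vcomp (whisk_bar (U ++ [ki]) Lcell V) r).
Proof.
  cell_types. pose proof (typed_barL ki [2] lk2 TK). intros; subst. unfold Lcell.
  rw (barR_unfold 2 [ki;li] lawL TLL U V).
  rw lawL_unfold.
  rw (slide_lr _ _ (eta 2) (mu ki) []).
  rw (wdl_mu_s _ _ _ Hk).
  rw (wdl_eta_t _ _ _ Hk).
  rwb (barL_unfold ki [2] lk2 TK U (ki :: li :: 2 :: V)).
  rw (mu_law_barL ki [2] lk2 TK (wdl_mu_s _ _ _ Hk) U (li :: 2 :: V)).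
  rw (slide_rl _ _ (mu ki) ll2 []).
  rw (slide_rl _ _ (mu ki) (mu 2) [li]).
  rwb lawL_unfold. rwb (barR_unfold 2 [ki;li] lawL TLL (U ++ [ki]) V).
  reflexivity.
Qed.

Lemma lam_left_barR : lam_left (monad ki) (monad li) S2 lk2 ll2 = barR 2 [ki; li] lawL.
Proof.
  cell_types.
  unfold lam_left, wl, wr.
  change (vcomp (hcomp (idw IK [ki;li]) (mu 2)) (vcomp (whisk_K [ki] ll2 [2])
    (vcomp (hcomp lk2 (idw IK [li;2])) (hcomp (eta 2) (idw IK [ki;li;2]))))
    = barR 2 [ki; li] lawL).
  erewrite <- (whisk_nil_r IK (mu 2)), <- (whisk_nil_l IK lk2), <- (whisk_nil_l IK (eta 2)) by typecheck.
  apply eq_of_comp_idw with IK [ki;li;2] [ki;li;2]; [typecheck | unfold barR; typecheck | ].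
  unfold barR. vcomp_normalize.
  rw lawL_unfold.
  rw (whisk_bar_K_comp' [] [ki;li;2] (eta 2)). split_idw.
  rw (whisk_bar_K_comp' [] [li;2] lk2). split_idw.
  rw (whisk_bar_K_comp' [ki] [2] ll2). split_idw.
  rw (whisk_bar_K_comp [ki;li] [] (mu 2)). split_idw.
  rw (slide_lr _ _ (sb ki) (sb 2)). rw (slide_lr _ _ (sb li) (sb 2)). rw (slide_lr _ _ (sb ki) (sb 2)).
  rw (absorb_sb_src _ (mu 2)).
  rw (slide_rl _ _ (sb ki) (sb li)). rw (absorb_sb_tgt _ ll2).
  rw sb_K_idem. rw (slide_lr _ _ (sb ki) ll2).
  rw (slide_lr _ _ (sb ki) (sb li)). rw (absorb_sb_src _ ll2).
  rw (slide_lr _ _ (sb ki) (sb 2)). rw (slide_lr _ _ ll2 (sb 2)). rw (absorb_sb_src _ (mu 2)).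
  rw (absorb_sb_tgt _ lk2).
  rw (absorb_sb_src _ lk2).
  rw (slide_lr _ _ lk2 (sb li)). rw (absorb_sb_src _ ll2).
  rw (slide_lr _ _ lk2 (sb 2)). rw (slide_lr _ _ ll2 (sb 2)). rw (absorb_sb_src _ (mu 2)).
  reflexivity.
Qed.

End LeftArrow.

Lemma idw_comp_wr y m n k : typed_bar y m n -> vcomp (idw Ibar (n ++ [k])) (hcomp y (idw IK [k])) = whisk_bar [] y [k].
Proof. intros. erewrite whisk_nil_l by eauto. rewrite <- idw_app. erewrite interchange_typed by typecheck. absorb_ids. reflexivity. Qed.
Lemma wr_comp_idw y m n k : typed_bar y m n -> vcomp (hcomp y (idw IK [k])) (idw Ibar (m ++ [k])) = whisk_bar [] y [k].
Proof. intros. erewrite whisk_nil_l by eauto. rewrite <- idw_app. erewrite interchange_typed by typecheck. absorb_ids. reflexivity. Qed.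
Lemma idw_comp_wl y m n k : typed_bar y m n -> vcomp (idw Ibar (k :: n)) (hcomp (idw IK [k]) y) = whisk_bar [k] y [].
Proof.
  intros. erewrite whisk_nil_r by eauto. change (idw Ibar (k :: n)) with (idw Ibar ([k] ++ n)). rewrite <- idw_app.
  erewrite interchange_typed by typecheck. absorb_ids. reflexivity.
Qed.
Lemma wl_comp_idw y m n k : typed_bar y m n -> vcomp (hcomp (idw IK [k]) y) (idw Ibar (k :: m)) = whisk_bar [k] y [].
Proof.
  intros. erewrite whisk_nil_r by eauto. change (idw Ibar (k :: m)) with (idw Ibar ([k] ++ m)). rewrite <- idw_app.
  erewrite interchange_typed by typecheck. absorb_ids. reflexivity.
Qed.

Lemma insert_idw_r X W u v p : typed_bar X u v -> typed_K W p u -> vcomp X W = vcomp X (vcomp (idw Ibar u) W).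
Proof. intros. erewrite vcompA_typed by typecheck. erewrite comp_idw by (typecheck || word_eq). reflexivity. Qed.
Lemma insert_idw_l X W u v p : typed_bar X u v -> typed_K W v p -> vcomp W X = vcomp (vcomp W (idw Ibar v)) X.
Proof. intros. erewrite <- vcompA_typed by typecheck. erewrite idw_comp by (typecheck || word_eq). reflexivity. Qed.

Lemma wr_wl_K x y h a k n m : typed_bar x (h :: a) n -> typed_bar y m (a ++ [k]) ->
  vcomp (hcomp x (idw IK [k])) (hcomp (idw IK [h]) y) = vcomp (whisk_bar [] x [k]) (whisk_bar [h] y []).
Proof.
  intros.
  erewrite <- (whisk_nil_l IK x), <- (whisk_nil_r IK y) by typecheck.
  apply eq_of_comp_idw with IK (h :: m) (n ++ [k]); [typecheck | typecheck | ]. vcomp_normalize.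
  rw (whisk_bar_K_comp [] [k] x). split_idw.
  rw (whisk_bar_K_comp' [h] [] y). split_idw.
  rw (slide_rl _ _ (sb h) (sb k) a).
  rw (absorb_sb_src [] x).
  rw (absorb_sb_tgt a y).
  reflexivity.
Qed.

Lemma wl_wr_K x y h a k n m : typed_bar x (a ++ [k]) n -> typed_bar y m (h :: a) ->
  vcomp (hcomp (idw IK [h]) x) (hcomp y (idw IK [k])) = vcomp (whisk_bar [h] x []) (whisk_bar [] y [k]).
Proof.
  intros.
  erewrite <- (whisk_nil_r IK x), <- (whisk_nil_l IK y) by typecheck.
  apply eq_of_comp_idw with IK (m ++ [k]) (h :: n); [typecheck | typecheck | ]. vcomp_normalize.
  rw (whisk_bar_K_comp [h] [] x). split_idw.
  rw (whisk_bar_K_comp' [] [k] y). split_idw.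
  rw (slide_lr _ _ (sb h) (sb k) a).
  rw (absorb_sb_src a x).
  rw (absorb_sb_tgt [] y).
  reflexivity.
Qed.


(** * The three monads *)

Section Main.
Context {l01 l02 l12 : c2 K}.
Hypothesis Hc : wdl2_cell S0 S1 S2 l01 l02 l12.

Lemma wdl01 : is_wdl (monad 1) (monad 0) l01. Proof. apply Hc. Qed.
Lemma wdl02 : is_wdl (monad 2) (monad 0) l02. Proof. apply Hc. Qed.
Lemma wdl12 : is_wdl (monad 2) (monad 1) l12. Proof. apply Hc. Qed.
Lemma typed_l01 : typed_bar l01 [1;0] [0;1]. Proof. apply (typed_wdl _ _ _ wdl01). Qed.
Lemma typed_l02 : typed_bar l02 [2;0] [0;2]. Proof. apply (typed_wdl _ _ _ wdl02). Qed.
Lemma typed_l12 : typed_bar l12 [2;1] [1;2]. Proof. apply (typed_wdl _ _ _ wdl12). Qed.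

Lemma yang_baxter_ctx U V U1 V1 U2 V2 U3 V3 U4 V4 U5 V5 r p q : typed_bar r p q ->
  U5 = U -> V5 = 1 :: V -> U3 = U -> V3 = 0 :: V -> U1 = U -> V1 = 2 :: V -> U2 = U ++ [1] -> V2 = V ->
  U4 = U ++ [0] -> V4 = V -> q = U ++ 2 :: 1 :: 0 :: V ->
  vcomp (whisk_bar U1 l01 V1) (vcomp (whisk_bar U2 l02 V2) (vcomp (whisk_bar U3 l12 V3) r))
  = vcomp (whisk_bar U4 l12 V4) (vcomp (whisk_bar U5 l02 V5) (vcomp (whisk_bar (U ++ [2]) l01 V) r)).
Proof.
  pose proof typed_l01; pose proof typed_l02; pose proof typed_l12.
  intros. assert (Heq := proj2 (proj2 (proj2 Hc))). unfold yang_baxter in Heq.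
  change (bm_tb S0) with (idw Ibar [0]) in Heq; change (bm_tb S1) with (idw Ibar [1]) in Heq;
  change (bm_tb S2) with (idw Ibar [2]) in Heq.
  to_whisk Heq.
  in_context Heq U V r.
Qed.

Definition lawR12 : c2 K := lawR 1 2 l01 l02.
Definition lawR21 : c2 K := lawR 2 1 l02 l01.
Definition R012 : c2 K := Rcell 1 2 l01 l02.
Definition R021 : c2 K := Rcell 2 1 l02 l01.
Definition lawL01 : c2 K := lawL 0 1 l02 l12.
Definition lawL10 : c2 K := lawL 1 0 l12 l02.
Definition L012 : c2 K := Lcell 0 1 l02 l12.
Definition L102 : c2 K := Lcell 1 0 l12 l02.
Definition lb01 : c2 K := barL 0 [1] l01.
Definition lb02 : c2 K := barL 0 [2] l02.
Definition lb12 : c2 K := barL 1 [2] l12.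

Lemma typed_lawR12 : typed_bar lawR12 [1;2;0] [0;1;2]. Proof. apply (typed_lawR _ _ _ _ wdl01 wdl02). Qed.
Lemma typed_lawR21 : typed_bar lawR21 [2;1;0] [0;2;1]. Proof. apply (typed_lawR _ _ _ _ wdl02 wdl01). Qed.
Lemma typed_lawL01 : typed_bar lawL01 [2;0;1] [0;1;2]. Proof. apply (typed_lawL _ _ _ _ wdl02 wdl12). Qed.
Lemma typed_lawL10 : typed_bar lawL10 [2;1;0] [1;0;2]. Proof. apply (typed_lawL _ _ _ _ wdl12 wdl02). Qed.
Lemma typed_R012 : typed_bar R012 [0;1;2] [0;1;2]. Proof. apply (typed_Rcell _ _ _ _ wdl01 wdl02). Qed.
Lemma typed_R021 : typed_bar R021 [0;2;1] [0;2;1]. Proof. apply (typed_Rcell _ _ _ _ wdl02 wdl01). Qed.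
Lemma typed_L012 : typed_bar L012 [0;1;2] [0;1;2]. Proof. apply (typed_Lcell _ _ _ _ wdl02 wdl12). Qed.
Lemma typed_L102 : typed_bar L102 [1;0;2] [1;0;2]. Proof. apply (typed_Lcell _ _ _ _ wdl12 wdl02). Qed.
Lemma typed_lb01 : typed_bar lb01 [0;1] [0;1]. Proof. apply typed_barL, typed_l01. Qed.
Lemma typed_lb02 : typed_bar lb02 [0;2] [0;2]. Proof. apply typed_barL, typed_l02. Qed.
Lemma typed_lb12 : typed_bar lb12 [1;2] [1;2]. Proof. apply typed_barL, typed_l12. Qed.
Lemma typed_barR02 : typed_bar (barR 2 [0] l02) [0;2] [0;2]. Proof. apply typed_barR, typed_l02. Qed.
Lemma typed_barR12 : typed_bar (barR 2 [1] l12) [1;2] [1;2]. Proof. apply typed_barR, typed_l12. Qed.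

Ltac main_types := pose proof typed_l01; pose proof typed_l02; pose proof typed_l12; pose proof typed_lawR12; pose proof typed_lawR21;
  pose proof typed_lawL01; pose proof typed_lawL10; pose proof typed_R012; pose proof typed_R021; pose proof typed_L012;
  pose proof typed_L102; pose proof typed_lb01; pose proof typed_lb02; pose proof typed_lb12; pose proof typed_barR02; pose proof typed_barR12.

Ltac rewrite_app t := let H := fresh in pose proof t as H; cbn [app] in H; rewrite H; clear H.
(* Brings an equation x = y into context form, with r an identity. *)
Ltac eq_by_idw u v := apply eq_of_comp_idw with Ibar u v; [typecheck | typecheck |].
Ltac unfold_whiskers :=
  unfold wl, wr;
  repeat match goal with |- context [id2 (s ?k)] => change (id2 (s k)) with (idw IK [k]) end.

Lemma R012_lam12 U V U1 V1 r p q : typed_bar r p q -> U1 = U ++ [0] -> V1 = V -> q = U ++ 0 :: 2 :: 1 :: V ->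
  vcomp (whisk_bar U R012 V) (vcomp (whisk_bar U1 l12 V1) r) = vcomp (whisk_bar U1 l12 V1) (vcomp (whisk_bar U R021 V) r).
Proof.
  main_types. intros; subst. unfold R012, R021, Rcell.
  rw (barL_unfold 0 [1;2] lawR12 typed_lawR12 U V).
  rw (lawR_unfold 1 2 l01 l02 wdl01 wdl02).
  rw (slide_rl _ _ l12 (eta 0) []).
  rw yang_baxter_ctx.
  rw (slide_lr _ _ (mu 0) l12 []).
  rwb (lawR_unfold 2 1 l02 l01 wdl02 wdl01).
  rwb (barL_unfold 0 [2;1] lawR21 typed_lawR21 U V).
  reflexivity.
Qed.

Lemma L012_lam01 U V V1 r p q : typed_bar r p q -> V1 = 2 :: V -> q = U ++ 1 :: 0 :: 2 :: V ->
  vcomp (whisk_bar U L012 V) (vcomp (whisk_bar U l01 V1) r) = vcomp (whisk_bar U l01 V1) (vcomp (whisk_bar U L102 V) r).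
Proof.
  main_types. intros; subst. unfold L012, L102, Lcell.
  rw (barR_unfold 2 [0;1] lawL01 typed_lawL01 U V).
  rw (lawL_unfold 0 1 l02 l12 wdl02 wdl12).
  rw (slide_lr _ _ (eta 2) l01 []).
  rwb yang_baxter_ctx.
  rw (slide_rl _ _ l01 (mu 2) []).
  rwb (lawL_unfold 1 0 l12 l02 wdl12 wdl02).
  rwb (barR_unfold 2 [1;0] lawL10 typed_lawL10 U V).
  reflexivity.
Qed.

Lemma L012_R012 U V r p q : typed_bar r p q -> q = U ++ 0 :: 1 :: 2 :: V ->
  vcomp (whisk_bar U L012 V) (vcomp (whisk_bar U R012 V) r) = vcomp (whisk_bar U L012 V) (vcomp (whisk_bar U lb01 (2 :: V)) r).
Proof.
  main_types. intros; subst. unfold R012, Rcell.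
  rw (barL_unfold 0 [1;2] lawR12 typed_lawR12 U V).
  unfold L012.
  rw (Lcell_mu_k 0 1 l02 l12 wdl02 wdl12).
  rw (lawR_unfold 1 2 l01 l02 wdl01 wdl02).
  rwb (barL_eta 0 [2] l02 typed_l02 (U ++ [0;1]) V).
  rw (barL_barR 0 2 l02 wdl02 (U ++ [0;1]) V).
  rw L012_lam01.
  rw (Lcell_barl2 1 0 l12 l02 wdl12 wdl02).
  rwb L012_lam01.
  rwb (Lcell_mu_k 0 1 l02 l12 wdl02 wdl12 U V).
  rwb (barL_unfold 0 [1] l01 typed_l01 U (2 :: V)).
  reflexivity.
Qed.

Lemma R012_lb12_L012 U V r p q : typed_bar r p q -> q = U ++ 0 :: 1 :: 2 :: V ->
  vcomp (whisk_bar U R012 V) (vcomp (whisk_bar (U ++ [0]) lb12 V) r) = vcomp (whisk_bar U R012 V) (vcomp (whisk_bar U L012 V) r).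
Proof.
  main_types. intros; subst. unfold L012, Lcell.
  rw (barR_unfold 2 [0;1] lawL01 typed_lawL01 U V).
  unfold R012.
  rw (Rcell_mu_q 1 2 l01 l02 wdl01 wdl02).
  rw (lawL_unfold 0 1 l02 l12 wdl02 wdl12).
  rwb (barR_eta 2 [0] l02 typed_l02 U (1 :: 2 :: V)).
  rwb (barL_barR 0 2 l02 wdl02 U (1 :: 2 :: V)).
  rw R012_lam12.
  rw (Rcell_bar0p 2 1 l02 l01 wdl02 wdl01).
  rwb R012_lam12.
  rwb (Rcell_mu_q 1 2 l01 l02 wdl01 wdl02 U V).
  rwb (barR_unfold 2 [1] l12 typed_l12 (U ++ [0]) V).
  rwb (barL_barR 1 2 l12 wdl12 (U ++ [0]) V).
  reflexivity.
Qed.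

Lemma L012_lb01_R012_lb12 U V r p q : typed_bar r p q -> q = U ++ 0 :: 1 :: 2 :: V ->
  vcomp (whisk_bar U L012 V) (vcomp (whisk_bar U lb01 (2 :: V)) r) = vcomp (whisk_bar U R012 V) (vcomp (whisk_bar (U ++ [0]) lb12 V) r).
Proof.
  main_types. intros; subst. unfold lb01, lb12.
  rw (barL_unfold 0 [1] l01 typed_l01 U (2 :: V)).
  unfold L012.
  rw (Lcell_mu_k 0 1 l02 l12 wdl02 wdl12).
  rw L012_lam01.
  unfold L102, Lcell.
  rw (barR_unfold 2 [1;0] lawL10 typed_lawL10 (U ++ [0]) V).
  rw (lawL_unfold 1 0 l12 l02 wdl12 wdl02).
  rw (barL_barR 1 2 l12 wdl12 (U ++ [0]) V).
  rw (barR_unfold 2 [1] l12 typed_l12 (U ++ [0]) V).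
  unfold R012.
  rw (Rcell_mu_q 1 2 l01 l02 wdl01 wdl02).
  rw R012_lam12.
  unfold R021, Rcell.
  rw (barL_unfold 0 [2;1] lawR21 typed_lawR21 U (2 :: V)).
  rw (lawR_unfold 2 1 l02 l01 wdl02 wdl01).
  rw (slide_rl _ _ (eta 2) (eta 0) [1]).
  rw (slide_lr _ _ l01 (mu 2) []).
  rw (slide_lr _ _ (mu 0) (mu 2) [1]).
  rw yang_baxter_ctx.
  rw (slide_lr _ _ (mu 0) l12 []).
  reflexivity.
Qed.

Lemma lb02_barR : lb02 = barR 2 [0] l02.
Proof.
  main_types. eq_by_idw [0;2] [0;2].
  unfold lb02. rewrite (whisk_nil_intro Ibar (barL 0 [2] l02) [0;2] [0;2]) by typecheck.
  rewrite (whisk_nil_intro Ibar (barR 2 [0] l02) [0;2] [0;2]) by typecheck.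
  rw (barL_barR 0 2 l02 wdl02 [] []). reflexivity.
Qed.
Lemma lb12_barR : lb12 = barR 2 [1] l12.
Proof.
  main_types. eq_by_idw [1;2] [1;2].
  unfold lb12. rewrite (whisk_nil_intro Ibar (barL 1 [2] l12) [1;2] [1;2]) by typecheck.
  rewrite (whisk_nil_intro Ibar (barR 2 [1] l12) [1;2] [1;2]) by typecheck.
  rw (barL_barR 1 2 l12 wdl12 [] []). reflexivity.
Qed.

Lemma R012_idem : idem2 (word [0;1;2]) R012.
Proof.
  main_types. apply idem2_of_typed; [exact typed_R012 |].
  eq_by_idw [0;1;2] [0;1;2].
  rewrite (whisk_nil_intro Ibar R012 _ _ typed_R012). vcomp_normalize. unfold R012, Rcell.
  rw (barL_idem 0 [1;2] lawR12 typed_lawR12 (lawR_mu 1 2 l01 l02 wdl01 wdl02)). reflexivity.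
Qed.
Lemma R021_idem : idem2 (word [0;2;1]) R021.
Proof.
  main_types. apply idem2_of_typed; [exact typed_R021 |].
  eq_by_idw [0;2;1] [0;2;1].
  rewrite (whisk_nil_intro Ibar R021 _ _ typed_R021). vcomp_normalize. unfold R021, Rcell.
  rw (barL_idem 0 [2;1] lawR21 typed_lawR21 (lawR_mu 2 1 l02 l01 wdl02 wdl01)). reflexivity.
Qed.
Lemma L012_idem : idem2 (word [0;1;2]) L012.
Proof.
  main_types. apply idem2_of_typed; [exact typed_L012 |].
  eq_by_idw [0;1;2] [0;1;2].
  rewrite (whisk_nil_intro Ibar L012 _ _ typed_L012). vcomp_normalize. unfold L012, Lcell.
  rw (barR_idem 2 [0;1] lawL01 typed_lawL01 (lawL_mu 0 1 l02 l12 wdl02 wdl12)). reflexivity.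
Qed.
Lemma L102_idem : idem2 (word [1;0;2]) L102.
Proof.
  main_types. apply idem2_of_typed; [exact typed_L102 |].
  eq_by_idw [1;0;2] [1;0;2].
  rewrite (whisk_nil_intro Ibar L102 _ _ typed_L102). vcomp_normalize. unfold L102, Lcell.
  rw (barR_idem 2 [1;0] lawL10 typed_lawL10 (lawL_mu 1 0 l12 l02 wdl12 wdl02)). reflexivity.
Qed.

Lemma K_R012_lb01 : vcomp R012 (wr lb01 (s 2)) = R012.
Proof.
  main_types. unfold_whiskers. rewrite (insert_idw_r R012 (hcomp lb01 (idw IK [2])) [0;1;2] [0;1;2] [0;1;2]) by typecheck.
  rewrite_app (idw_comp_wr lb01 [0;1] [0;1] 2 typed_lb01).
  eq_by_idw [0;1;2] [0;1;2]. rewrite (whisk_nil_intro Ibar R012 _ _ typed_R012). vcomp_normalize.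
  unfold R012. rw (Rcell_bar0p 1 2 l01 l02 wdl01 wdl02). reflexivity.
Qed.
Lemma K_lb01_R012 : R012 = vcomp (wr lb01 (s 2)) R012.
Proof.
  main_types. unfold_whiskers. rewrite (insert_idw_l R012 (hcomp lb01 (idw IK [2])) [0;1;2] [0;1;2] [0;1;2]) by typecheck.
  rewrite_app (wr_comp_idw lb01 [0;1] [0;1] 2 typed_lb01).
  eq_by_idw [0;1;2] [0;1;2]. rewrite (whisk_nil_intro Ibar R012 _ _ typed_R012). vcomp_normalize.
  unfold R012. rw (bar0p_Rcell 1 2 l01 l02 wdl01 wdl02). reflexivity.
Qed.
Lemma K_R021_lb02 : vcomp R021 (wr lb02 (s 1)) = R021.
Proof.
  main_types. unfold_whiskers. rewrite (insert_idw_r R021 (hcomp lb02 (idw IK [1])) [0;2;1] [0;2;1] [0;2;1]) by typecheck.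
  rewrite_app (idw_comp_wr lb02 [0;2] [0;2] 1 typed_lb02).
  eq_by_idw [0;2;1] [0;2;1]. rewrite (whisk_nil_intro Ibar R021 _ _ typed_R021). vcomp_normalize.
  unfold R021. rw (Rcell_bar0p 2 1 l02 l01 wdl02 wdl01). reflexivity.
Qed.
Lemma K_lb02_R021 : R021 = vcomp (wr lb02 (s 1)) R021.
Proof.
  main_types. unfold_whiskers. rewrite (insert_idw_l R021 (hcomp lb02 (idw IK [1])) [0;2;1] [0;2;1] [0;2;1]) by typecheck.
  rewrite_app (wr_comp_idw lb02 [0;2] [0;2] 1 typed_lb02).
  eq_by_idw [0;2;1] [0;2;1]. rewrite (whisk_nil_intro Ibar R021 _ _ typed_R021). vcomp_normalize.
  unfold R021. rw (bar0p_Rcell 2 1 l02 l01 wdl02 wdl01). reflexivity.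
Qed.

Lemma K_R012_lam12 : vcomp R012 (wl (s 0) l12) = vcomp (wl (s 0) l12) R021.
Proof.
  main_types. unfold_whiskers. rewrite (insert_idw_r R012 (hcomp (idw IK [0]) l12) [0;1;2] [0;1;2] [0;2;1]) by typecheck.
  rewrite_app (idw_comp_wl l12 [2;1] [1;2] 0 typed_l12).
  rewrite (insert_idw_l R021 (hcomp (idw IK [0]) l12) [0;2;1] [0;2;1] [0;1;2]) by typecheck.
  rewrite_app (wl_comp_idw l12 [2;1] [1;2] 0 typed_l12).
  eq_by_idw [0;2;1] [0;1;2]. rewrite (whisk_nil_intro Ibar R012 _ _ typed_R012), (whisk_nil_intro Ibar R021 _ _ typed_R021). vcomp_normalize.
  rw R012_lam12. reflexivity.
Qed.

Lemma K_R012_lam01 : vcomp R012 (wr l01 (s 2)) = vcomp (wr l01 (s 2)) (wl (s 1) lb02).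
Proof.
  main_types. unfold_whiskers. rewrite (insert_idw_r R012 (hcomp l01 (idw IK [2])) [0;1;2] [0;1;2] [1;0;2]) by typecheck.
  rewrite_app (idw_comp_wr l01 [1;0] [0;1] 2 typed_l01).
  rewrite_app (wr_wl_K l01 lb02 1 [0] 2 [0;1] [0;2] typed_l01 typed_lb02).
  eq_by_idw [1;0;2] [0;1;2]. rewrite (whisk_nil_intro Ibar R012 _ _ typed_R012). vcomp_normalize.
  unfold R012. rw (Rcell_lam0p 1 2 l01 l02 wdl01 wdl02). reflexivity.
Qed.
Lemma K_R021_lam02 : vcomp R021 (wr l02 (s 1)) = vcomp (wr l02 (s 1)) (wl (s 2) lb01).
Proof.
  main_types. unfold_whiskers. rewrite (insert_idw_r R021 (hcomp l02 (idw IK [1])) [0;2;1] [0;2;1] [2;0;1]) by typecheck.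
  rewrite_app (idw_comp_wr l02 [2;0] [0;2] 1 typed_l02).
  rewrite_app (wr_wl_K l02 lb01 2 [0] 1 [0;2] [0;1] typed_l02 typed_lb01).
  eq_by_idw [2;0;1] [0;2;1]. rewrite (whisk_nil_intro Ibar R021 _ _ typed_R021). vcomp_normalize.
  unfold R021. rw (Rcell_lam0p 2 1 l02 l01 wdl02 wdl01). reflexivity.
Qed.

Lemma K_L012_lb12 : vcomp L012 (wl (s 0) lb12) = L012.
Proof.
  main_types. unfold_whiskers. rewrite (insert_idw_r L012 (hcomp (idw IK [0]) lb12) [0;1;2] [0;1;2] [0;1;2]) by typecheck.
  rewrite_app (idw_comp_wl lb12 [1;2] [1;2] 0 typed_lb12). rewrite lb12_barR.
  eq_by_idw [0;1;2] [0;1;2]. rewrite (whisk_nil_intro Ibar L012 _ _ typed_L012). vcomp_normalize.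
  unfold L012. rw (Lcell_barl2 0 1 l02 l12 wdl02 wdl12). reflexivity.
Qed.
Lemma K_lb12_L012 : L012 = vcomp (wl (s 0) lb12) L012.
Proof.
  main_types. unfold_whiskers. rewrite (insert_idw_l L012 (hcomp (idw IK [0]) lb12) [0;1;2] [0;1;2] [0;1;2]) by typecheck.
  rewrite_app (wl_comp_idw lb12 [1;2] [1;2] 0 typed_lb12). rewrite lb12_barR.
  eq_by_idw [0;1;2] [0;1;2]. rewrite (whisk_nil_intro Ibar L012 _ _ typed_L012). vcomp_normalize.
  unfold L012. rw (barl2_Lcell 0 1 l02 l12 wdl02 wdl12). reflexivity.
Qed.
Lemma K_L102_lb02 : vcomp L102 (wl (s 1) lb02) = L102.
Proof.
  main_types. unfold_whiskers. rewrite (insert_idw_r L102 (hcomp (idw IK [1]) lb02) [1;0;2] [1;0;2] [1;0;2]) by typecheck.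
  rewrite_app (idw_comp_wl lb02 [0;2] [0;2] 1 typed_lb02). rewrite lb02_barR.
  eq_by_idw [1;0;2] [1;0;2]. rewrite (whisk_nil_intro Ibar L102 _ _ typed_L102). vcomp_normalize.
  unfold L102. rw (Lcell_barl2 1 0 l12 l02 wdl12 wdl02). reflexivity.
Qed.
Lemma K_lb02_L102 : L102 = vcomp (wl (s 1) lb02) L102.
Proof.
  main_types. unfold_whiskers. rewrite (insert_idw_l L102 (hcomp (idw IK [1]) lb02) [1;0;2] [1;0;2] [1;0;2]) by typecheck.
  rewrite_app (wl_comp_idw lb02 [0;2] [0;2] 1 typed_lb02). rewrite lb02_barR.
  eq_by_idw [1;0;2] [1;0;2]. rewrite (whisk_nil_intro Ibar L102 _ _ typed_L102). vcomp_normalize.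
  unfold L102. rw (barl2_Lcell 1 0 l12 l02 wdl12 wdl02). reflexivity.
Qed.

Lemma K_L012_lam01 : vcomp L012 (wr l01 (s 2)) = vcomp (wr l01 (s 2)) L102.
Proof.
  main_types. unfold_whiskers. rewrite (insert_idw_r L012 (hcomp l01 (idw IK [2])) [0;1;2] [0;1;2] [1;0;2]) by typecheck.
  rewrite_app (idw_comp_wr l01 [1;0] [0;1] 2 typed_l01).
  rewrite (insert_idw_l L102 (hcomp l01 (idw IK [2])) [1;0;2] [1;0;2] [0;1;2]) by typecheck.
  rewrite_app (wr_comp_idw l01 [1;0] [0;1] 2 typed_l01).
  eq_by_idw [1;0;2] [0;1;2]. rewrite (whisk_nil_intro Ibar L012 _ _ typed_L012), (whisk_nil_intro Ibar L102 _ _ typed_L102). vcomp_normalize.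
  rw L012_lam01. reflexivity.
Qed.

Lemma K_L012_lam12 : vcomp L012 (wl (s 0) l12) = vcomp (wl (s 0) l12) (wr lb02 (s 1)).
Proof.
  main_types. unfold_whiskers. rewrite (insert_idw_r L012 (hcomp (idw IK [0]) l12) [0;1;2] [0;1;2] [0;2;1]) by typecheck.
  rewrite_app (idw_comp_wl l12 [2;1] [1;2] 0 typed_l12).
  rewrite_app (wl_wr_K l12 lb02 0 [2] 1 [1;2] [0;2] typed_l12 typed_lb02). rewrite lb02_barR.
  eq_by_idw [0;2;1] [0;1;2]. rewrite (whisk_nil_intro Ibar L012 _ _ typed_L012). vcomp_normalize.
  unfold L012. rw (Lcell_lam_l2 0 1 l02 l12 wdl02 wdl12). reflexivity.
Qed.
Lemma K_L102_lam02 : vcomp L102 (wl (s 1) l02) = vcomp (wl (s 1) l02) (wr lb12 (s 0)).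
Proof.
  main_types. unfold_whiskers. rewrite (insert_idw_r L102 (hcomp (idw IK [1]) l02) [1;0;2] [1;0;2] [1;2;0]) by typecheck.
  rewrite_app (idw_comp_wl l02 [2;0] [0;2] 1 typed_l02).
  rewrite_app (wl_wr_K l02 lb12 1 [2] 0 [0;2] [1;2] typed_l02 typed_lb12). rewrite lb12_barR.
  eq_by_idw [1;2;0] [1;0;2]. rewrite (whisk_nil_intro Ibar L102 _ _ typed_L102). vcomp_normalize.
  unfold L102. rw (Lcell_lam_l2 1 0 l12 l02 wdl12 wdl02). reflexivity.
Qed.

Lemma K_L012_R012 : vcomp L012 R012 = vcomp L012 (wr lb01 (s 2)).
Proof.
  main_types. unfold_whiskers. rewrite (insert_idw_r L012 (hcomp lb01 (idw IK [2])) [0;1;2] [0;1;2] [0;1;2]) by typecheck.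
  rewrite_app (idw_comp_wr lb01 [0;1] [0;1] 2 typed_lb01).
  eq_by_idw [0;1;2] [0;1;2]. rewrite (whisk_nil_intro Ibar L012 _ _ typed_L012), (whisk_nil_intro Ibar R012 _ _ typed_R012). vcomp_normalize.
  rw L012_R012. reflexivity.
Qed.
Lemma K_L012_lb01_R012_lb12 : vcomp L012 (wr lb01 (s 2)) = vcomp R012 (wl (s 0) lb12).
Proof.
  main_types. unfold_whiskers. rewrite (insert_idw_r L012 (hcomp lb01 (idw IK [2])) [0;1;2] [0;1;2] [0;1;2]) by typecheck.
  rewrite_app (idw_comp_wr lb01 [0;1] [0;1] 2 typed_lb01).
  rewrite (insert_idw_r R012 (hcomp (idw IK [0]) lb12) [0;1;2] [0;1;2] [0;1;2]) by typecheck.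
  rewrite_app (idw_comp_wl lb12 [1;2] [1;2] 0 typed_lb12).
  eq_by_idw [0;1;2] [0;1;2]. rewrite (whisk_nil_intro Ibar L012 _ _ typed_L012), (whisk_nil_intro Ibar R012 _ _ typed_R012). vcomp_normalize.
  rw L012_lb01_R012_lb12. reflexivity.
Qed.
Lemma K_R012_lb12_L012 : vcomp R012 (wl (s 0) lb12) = vcomp R012 L012.
Proof.
  main_types. unfold_whiskers. rewrite (insert_idw_r R012 (hcomp (idw IK [0]) lb12) [0;1;2] [0;1;2] [0;1;2]) by typecheck.
  rewrite_app (idw_comp_wl lb12 [1;2] [1;2] 0 typed_lb12).
  eq_by_idw [0;1;2] [0;1;2]. rewrite (whisk_nil_intro Ibar L012 _ _ typed_L012), (whisk_nil_intro Ibar R012 _ _ typed_R012). vcomp_normalize.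
  rw R012_lb12_L012. reflexivity.
Qed.

Lemma lam_bar01E : lam_bar S1 S0 l01 = lb01.
Proof. main_types. unfold lam_bar, lb01, barL. erewrite (whisk_nil_l Ibar (mu 0)), (whisk_nil_r Ibar l01), (whisk_nil_r Ibar (eta 0)) by typecheck. reflexivity. Qed.
Lemma lam_bar02E : lam_bar S2 S0 l02 = lb02.
Proof. main_types. unfold lam_bar, lb02, barL. erewrite (whisk_nil_l Ibar (mu 0)), (whisk_nil_r Ibar l02), (whisk_nil_r Ibar (eta 0)) by typecheck. reflexivity. Qed.
Lemma lam_bar12E : lam_bar S2 S1 l12 = lb12.
Proof. main_types. unfold lam_bar, lb12, barL. erewrite (whisk_nil_l Ibar (mu 1)), (whisk_nil_r Ibar l12), (whisk_nil_r Ibar (eta 1)) by typecheck. reflexivity. Qed.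
Lemma lam_right012E : lam_right S0 S1 S2 l01 l02 = R012.
Proof. exact (lam_right_barL 1 2 l01 l02 wdl01 wdl02). Qed.
Lemma lam_right021E : lam_right S0 S2 S1 l02 l01 = R021.
Proof. exact (lam_right_barL 2 1 l02 l01 wdl02 wdl01). Qed.
Lemma lam_left012E : lam_left S0 S1 S2 l02 l12 = L012.
Proof. exact (lam_left_barR 0 1 l02 l12 wdl02 wdl12). Qed.
Lemma lam_left102E : lam_left S1 S0 S2 l12 l02 = L102.
Proof. exact (lam_left_barR 1 0 l12 l02 wdl12 wdl02). Qed.

End Main.
End Pasting.

Theorem lemma2p2 (K : TwoCat) (A : ob K) (S0 S1 S2 : bar_monad K A)
  (l01 l02 l12 : c2 K) :
  wdl2_cell S0 S1 S2 l01 l02 l12 ->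
  let s0 := bm_t S0 in let s1 := bm_t S1 in let s2 := bm_t S2 in
  let lb01 := lam_bar S1 S0 l01 in
  let lb02 := lam_bar S2 S0 l02 in
  let lb12 := lam_bar S2 S1 l12 in
  let R012 := lam_right S0 S1 S2 l01 l02 in
  let R021 := lam_right S0 S2 S1 l02 l01 in
  let L012 := lam_left S0 S1 S2 l02 l12 in
  let L102 := lam_left S1 S0 S2 l12 l02 in
  idem2 (comp1 s0 (comp1 s1 s2)) R012 /\
  idem2 (comp1 s0 (comp1 s2 s1)) R021 /\
  idem2 (comp1 s0 (comp1 s1 s2)) L012 /\
  idem2 (comp1 s1 (comp1 s0 s2)) L102 /\
  (vcomp R012 (wr lb01 s2) = R012 /\ R012 = vcomp (wr lb01 s2) R012) /\
  (vcomp R021 (wr lb02 s1) = R021 /\ R021 = vcomp (wr lb02 s1) R021) /\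
  vcomp R012 (wl s0 l12) = vcomp (wl s0 l12) R021 /\
  vcomp R012 (wr l01 s2) = vcomp (wr l01 s2) (wl s1 lb02) /\
  vcomp R021 (wr l02 s1) = vcomp (wr l02 s1) (wl s2 lb01) /\
  (vcomp L012 (wl s0 lb12) = L012 /\ L012 = vcomp (wl s0 lb12) L012) /\
  (vcomp L102 (wl s1 lb02) = L102 /\ L102 = vcomp (wl s1 lb02) L102) /\
  vcomp L012 (wr l01 s2) = vcomp (wr l01 s2) L102 /\
  vcomp L012 (wl s0 l12) = vcomp (wl s0 l12) (wr lb02 s1) /\
  vcomp L102 (wl s1 l02) = vcomp (wl s1 l02) (wr lb12 s0) /\
  (vcomp L012 R012 = vcomp L012 (wr lb01 s2) /\
   vcomp L012 (wr lb01 s2) = vcomp R012 (wl s0 lb12) /\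
   vcomp R012 (wl s0 lb12) = vcomp R012 L012).
Proof.
  intros Hc; cbv zeta.
  rewrite (lam_bar01E Hc), (lam_bar02E Hc), (lam_bar12E Hc),
    (lam_right012E Hc), (lam_right021E Hc), (lam_left012E Hc), (lam_left102E Hc).
  repeat match goal with |- _ /\ _ => split end;
    eauto using R012_idem, R021_idem, L012_idem, L102_idem,
      K_R012_lb01, K_lb01_R012, K_R021_lb02, K_lb02_R021, K_R012_lam12,
      K_R012_lam01, K_R021_lam02, K_L012_lb12, K_lb12_L012, K_L102_lb02,
      K_lb02_L102, K_L012_lam01, K_L012_lam12, K_L102_lam02,
      K_L012_R012, K_L012_lb01_R012_lb12, K_R012_lb12_L012.
Qed.
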